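(* Suppose that $\mathcal X$ is a wide family of subsets of $\mathbb N$ and $\mathfrak A=(\alpha_X:X\in\mathcal X)$ is coherent. Then the C*-algebra $\mathcal M_{\mathcal X,\mathfrak A}$ is generated by its projections.
   Context: Fix an orthonormal basis $(e_k)$ of $\ell_2$. For $A\subseteq\mathbb N$, $P_A$ is the projection onto $\overline{\mathrm{span}}\{e_{2k},e_{2k+1}:k\in A\}$; $H_n=\mathrm{span}\{e_{2n},e_{2n+1}\}$. $\mathcal A_0$ is the set of $T\in\mathcal B(\ell_2)$ with $\langle Te_k,e_m\rangle\ne0\Rightarrow\{k,m\}\subseteq\{2n,2n+1\}$ for some $n$, written $T=(T_n)$ with $T_n\in\mathcal B(H_n)$; $\mathcal A_0(X)=\{T\in\mathcal A_0:T_n=0\ \forall n\notin X\}$. For $\alpha\in(71/72,1]$, $f_{\alpha,2n}=\alpha e_{2n}+\sqrt{1-\alpha^2}e_{2n+1}$, $f_{\alpha,2n+1}=\sqrt{1-\alpha^2}e_{2n}-\alpha e_{2n+1}$; $\mathcal D(X,\alpha)$: $T\in\mathcal A_0(X)$ with $T_n$ diagonal in $\{f_{\alpha,2n},f_{\alpha,2n+1}\}$ for $n\in X$; $\mathcal D_{\mathcal K}(X,\alpha)=\{S+R:S\in\mathcal D(X,\alpha),R\in\mathcal K(\ell_2)\cap\mathcal A_0(X)\}$. $\mathcal M_{\mathcal X,\mathfrak A}=\{T\in\mathcal A_0:P_XTP_X\in\mathcal D_{\mathcal K}(X,\alpha_X)\ \forall X\in\mathcal X\}$ (a C*-algebra).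 $\mathcal X$ is wide if every infinite subset of $\mathbb N$ has infinite intersection with some member of $\mathcal X$; $\mathfrak A$ is coherent if $\alpha_X\in(71/72,1]$ for all $X$ and $\alpha_X=\alpha_Y$ whenever $X\cap Y$ is infinite. *)

From Stdlib Require Import Reals Lra ClassicalEpsilon.
From Coquelicot Require Import Coquelicot.
Open Scope R_scope.

Definition vec := nat -> C.
Definition vzero : vec := fun _ => RtoC 0.
Definition vadd (x y : vec) : vec := fun k => Cplus (x k) (y k).
Definition vscal (c : C) (x : vec) : vec := fun k => Cmult c (x k).

Definition l2 (x : vec) : Prop := ex_series (fun k => (Cmod (x k)) ^ 2).
Definition norm2 (x : vec) : R := sqrt (Series (fun k => (Cmod (x k)) ^ 2)).
Definition inner (x y : vec) : C :=
  (Series (fun k => Re (Cmult (x k) (Cconj (y k)))),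
   Series (fun k => Im (Cmult (x k) (Cconj (y k))))).

Definition e (k : nat) : vec := fun j => if Nat.eqb j k then RtoC 1 else RtoC 0.

(** * Bounded operators on l2.
    An operator is represented by a function vec -> vec; to make Leibniz equality
    coincide with equality of operators on l2, we require it to vanish off l2. *)
Definition op := vec -> vec.

Definition bounded_op (T : op) : Prop :=
  (forall x, ~ l2 x -> T x = vzero) /\
  (forall x, l2 x -> l2 (T x)) /\
  (forall x y c, l2 x -> l2 y -> T (vadd x (vscal c y)) = vadd (T x) (vscal c (T y))) /\
  (exists M, forall x, l2 x -> norm2 (T x) <= M * norm2 x).

Definition opadd (T S : op) : op := fun x => vadd (T x) (S x).
Definition opscal (c : C) (T : op) : op := fun x => vscal c (T x).
Definition opcomp (T S : op) : op := fun x => T (S x).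

Definition is_adjoint (T S : op) : Prop :=
  forall x y, l2 x -> l2 y -> inner (T x) y = inner x (S y).

Definition is_projection (P : op) : Prop :=
  bounded_op P /\ opcomp P P = P /\ is_adjoint P P.

(** compact: image of the unit ball is relatively (sequentially) compact,
    i.e. every sequence in the unit ball has a subsequence whose image is Cauchy
    (l2 is complete). *)
Definition compact_op (T : op) : Prop :=
  bounded_op T /\
  forall u : nat -> vec, (forall n, l2 (u n) /\ norm2 (u n) <= 1) ->
    exists phi : nat -> nat, (forall n, (phi n < phi (S n))%nat) /\
      forall eps, 0 < eps -> exists N, forall n m, (N <= n)%nat -> (N <= m)%nat ->
        norm2 (vadd (T (u (phi n))) (vscal (RtoC (-1)) (T (u (phi m))))) <= eps.

Definition opset := op -> Prop.

Definition cstar_subalg (S : opset) : Prop :=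
  (forall T, S T -> bounded_op T) /\
  (forall T U, S T -> S U -> S (opadd T U)) /\
  (forall c T, S T -> S (opscal c T)) /\
  (forall T U, S T -> S U -> S (opcomp T U)) /\
  (forall T T', S T -> bounded_op T' -> is_adjoint T T' -> S T') /\
  (forall T, bounded_op T ->
     (forall eps, 0 < eps -> exists U, S U /\
        forall x, l2 x -> norm2 (vadd (T x) (vscal (RtoC (-1)) (U x))) <= eps * norm2 x) ->
     S T).

Definition cstar_generated (G : opset) : opset :=
  fun T => forall S, cstar_subalg S -> (forall P, G P -> S P) -> S T.

Definition generated_by_projections (M : opset) : Prop :=
  forall T, M T <-> cstar_generated (fun P => M P /\ is_projection P) T.

Definition PA (A : nat -> Prop) : op := fun x =>
  if excluded_middle_informative (l2 x) then
    (fun j => if excluded_middle_informative (A (j / 2)%nat) then x j else RtoC 0)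
  else vzero.

Definition in_block (n k : nat) : Prop := k = (2 * n)%nat \/ k = (2 * n + 1)%nat.

Definition A0 (T : op) : Prop :=
  bounded_op T /\
  forall k m, inner (T (e k)) (e m) <> RtoC 0 -> exists n, in_block n k /\ in_block n m.

Definition block_zero (T : op) (n : nat) : Prop :=
  forall k m, in_block n k -> in_block n m -> inner (T (e k)) (e m) = RtoC 0.

Definition A0_on (X : nat -> Prop) (T : op) : Prop :=
  A0 T /\ forall n, ~ X n -> block_zero T n.

Definition f_even (alpha : R) (n : nat) : vec := fun j =>
  if Nat.eqb j (2 * n) then RtoC alpha
  else if Nat.eqb j (2 * n + 1) then RtoC (sqrt (1 - alpha ^ 2)) else RtoC 0.
Definition f_odd (alpha : R) (n : nat) : vec := fun j =>
  if Nat.eqb j (2 * n) then RtoC (sqrt (1 - alpha ^ 2))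
  else if Nat.eqb j (2 * n + 1) then RtoC (- alpha) else RtoC 0.

Definition Dset (X : nat -> Prop) (alpha : R) (T : op) : Prop :=
  A0_on X T /\
  forall n, X n ->
    inner (T (f_even alpha n)) (f_odd alpha n) = RtoC 0 /\
    inner (T (f_odd alpha n)) (f_even alpha n) = RtoC 0.

Definition DKset (X : nat -> Prop) (alpha : R) (T : op) : Prop :=
  exists S Rk, Dset X alpha S /\ compact_op Rk /\ A0_on X Rk /\ T = opadd S Rk.

Definition Mset (XX : (nat -> Prop) -> Prop) (alph : (nat -> Prop) -> R) (T : op) : Prop :=
  A0 T /\ forall X, XX X -> DKset X (alph X) (opcomp (PA X) (opcomp T (PA X))).

Definition infinite_set (Y : nat -> Prop) : Prop := forall N, exists n, (N <= n)%nat /\ Y n.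

Definition wide (XX : (nat -> Prop) -> Prop) : Prop :=
  forall Y, infinite_set Y -> exists X, XX X /\ infinite_set (fun n => Y n /\ X n).

Definition coherent (XX : (nat -> Prop) -> Prop) (alph : (nat -> Prop) -> R) : Prop :=
  (forall X, XX X -> 71 / 72 < alph X <= 1) /\
  (forall X Y, XX X -> XX Y -> infinite_set (fun n => X n /\ Y n) -> alph X = alph Y).

(* Every T in A_0 acts blockwise through its 2x2 blocks, and a compact operator
   in A_0 has blocks tending to 0.  Hence T lies in M exactly when, for each X in
   the family, the off-diagonal coefficients <T f_(alpha,2n), f_(alpha,2n+1)> and
   <T f_(alpha,2n+1), f_(alpha,2n)> tend to 0 as n -> oo in X.  This condition
   survives sums, products, adjoints and norm limits, so M is a C*-algebra.
   A Hermitian block is T_n = mu_n + g_n E_n with E_n the rank-one spectral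
   projection and g_n >= 0 the eigenvalue gap; the off-diagonal coefficients of
   E_n are those of T_n divided by g_n, so keeping E_n on the blocks with
   g_n >= delta gives a projection of M.  Layer-cake sums of such projections
   approximate the real and imaginary parts of any T in M within delta in every
   entry, hence in norm. *)

From Stdlib Require Import Reals ClassicalEpsilon.
From Coquelicot Require Import Coquelicot.
From Stdlib Require Import Lra Lia FunctionalExtensionality Classical.
Open Scope R_scope.

Lemma div2_cases (j : nat) : j = (2 * (j / 2))%nat \/ j = (2 * (j / 2) + 1)%nat.
Proof.
  pose proof (Nat.div_mod j 2 ltac:(lia)). pose proof (Nat.mod_upper_bound j 2 ltac:(lia)).
  lia.
Qed.

Lemma double_div2 (n : nat) : ((2 * n) / 2)%nat = n.
Proof. symmetry. apply (Nat.div_unique _ 2 _ 0); lia. Qed.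

Lemma double_succ_div2 (n : nat) : ((2 * n + 1) / 2)%nat = n.
Proof. symmetry. apply (Nat.div_unique _ 2 _ 1); lia. Qed.

Lemma double_succ_neq_double n : (2 * n + 1 =? 2 * n)%nat = false.
Proof. apply Nat.eqb_neq; lia. Qed.

Lemma double_neq_double_succ n : (2 * n =? 2 * n + 1)%nat = false.
Proof. apply Nat.eqb_neq; lia. Qed.

Lemma even_double n : Nat.even (2 * n) = true.
Proof. rewrite Nat.even_mul. reflexivity. Qed.

Lemma even_double_succ n : Nat.even (2 * n + 1) = false.
Proof. rewrite Nat.even_add, even_double. reflexivity. Qed.

Lemma in_block_iff_div2 (n k : nat) : in_block n k <-> (k / 2)%nat = n.
Proof.
  unfold in_block; split.
  - intros [-> | ->]. apply double_div2. apply double_succ_div2.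
  - intros <-. apply div2_cases.
Qed.

Lemma same_block_cases k j : (k / 2)%nat = (j / 2)%nat ->
  (k = 2 * (j / 2) \/ k = 2 * (j / 2) + 1)%nat /\ (j = 2 * (j / 2) \/ j = 2 * (j / 2) + 1)%nat.
Proof. intros H. pose proof (div2_cases k). pose proof (div2_cases j). lia. Qed.

Lemma same_block_ind (P : nat -> nat -> Prop) :
  (forall n, P (2 * n)%nat (2 * n)%nat) -> (forall n, P (2 * n)%nat (2 * n + 1)%nat) ->
  (forall n, P (2 * n + 1)%nat (2 * n)%nat) -> (forall n, P (2 * n + 1)%nat (2 * n + 1)%nat) ->
  forall k j, (k / 2 = j / 2)%nat -> P k j.
Proof.
  intros H1 H2 H3 H4 k j E. destruct (same_block_cases k j E) as [Hk Hj].
  generalize dependent (j / 2)%nat. intros n _ Hk Hj.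
  destruct Hk as [-> | ->], Hj as [-> | ->]; auto.
Qed.

Lemma C_ext (a b : C) : fst a = fst b -> snd a = snd b -> a = b.
Proof. destruct a, b; simpl; intros; subst; reflexivity. Qed.

Lemma Cconj_RtoC (r : R) : Cconj (RtoC r) = RtoC r.
Proof. apply C_ext; simpl; ring. Qed.

Lemma RtoC_Ropp r : RtoC (- r) = Copp (RtoC r).
Proof. apply C_ext; simpl; ring. Qed.

Lemma Cmod_sq_nonneg (c : C) : 0 <= Cmod c ^ 2.
Proof. pose proof (Cmod_ge_0 c). nra. Qed.

Lemma Cmod_sq_add (a b : C) : Cmod (Cplus a b) ^ 2 <= 2 * Cmod a ^ 2 + 2 * Cmod b ^ 2.
Proof.
  rewrite !Cmod2_alt. destruct a as [a1 a2], b as [b1 b2]; unfold Re, Im; simpl.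
  pose proof (pow2_ge_0 (a1 - b1)). pose proof (pow2_ge_0 (a2 - b2)). nra.
Qed.

Lemma Cmod_sq_mult (a b : C) : Cmod (Cmult a b) ^ 2 = Cmod a ^ 2 * Cmod b ^ 2.
Proof. rewrite Cmod_mult. ring. Qed.

Lemma im_le_Cmod (c : C) : Rabs (snd c) <= Cmod c.
Proof. eapply Rle_trans. apply Rmax_r. apply Rmax_Cmod. Qed.

Lemma Cmod_le_Rabs_re_im (z : C) : Cmod z <= Rabs (fst z) + Rabs (snd z).
Proof.
  unfold Cmod. apply Rsqr_incr_0_var.
  - rewrite Rsqr_sqrt by nra. unfold Rsqr. destruct z as [a b]; simpl.
    pose proof (Rabs_pos a). pose proof (Rabs_pos b).
    assert (a * a = Rabs a * Rabs a) by (rewrite <- Rabs_mult; rewrite Rabs_pos_eq; nra).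
    assert (b * b = Rabs b * Rabs b) by (rewrite <- Rabs_mult; rewrite Rabs_pos_eq; nra). nra.
  - pose proof (Rabs_pos (fst z)). pose proof (Rabs_pos (snd z)). lra.
Qed.

Lemma Cmod_small_eq0 (c : C) : (forall eps, 0 < eps -> Cmod c <= eps) -> c = RtoC 0.
Proof.
  intros H. apply Cmod_eq_0. pose proof (Cmod_ge_0 c).
  destruct (Req_dec (Cmod c) 0); auto. specialize (H (Cmod c / 2) ltac:(lra)). lra.
Qed.

Lemma Cmod_mult3_le (a b c : C) (A : R) :
  Cmod a <= A -> Cmod b <= 1 -> Cmod c <= 1 -> Cmod (Cmult a (Cmult b c)) <= A.
Proof.
  intros Ha Hb Hc. rewrite !Cmod_mult.
  pose proof (Cmod_ge_0 a). pose proof (Cmod_ge_0 b). pose proof (Cmod_ge_0 c).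
  apply Rle_trans with (Cmod a * (1 * 1)); [|lra].
  apply Rmult_le_compat_l; auto. apply Rmult_le_compat; auto.
Qed.

Lemma Cmod_lin2_sq (a b u v : C) (B : R) : Cmod a <= B -> Cmod b <= B ->
  Cmod (Cplus (Cmult u a) (Cmult v b)) ^ 2 <= 2 * B ^ 2 * (Cmod u ^ 2 + Cmod v ^ 2).
Proof.
  intros Ha Hb. eapply Rle_trans. apply Cmod_sq_add. rewrite !Cmod_sq_mult.
  pose proof (Cmod_ge_0 a). pose proof (Cmod_ge_0 b).
  assert (Cmod a ^ 2 <= B ^ 2) by (apply pow_incr; lra).
  assert (Cmod b ^ 2 <= B ^ 2) by (apply pow_incr; lra).
  pose proof (Cmod_sq_nonneg u). pose proof (Cmod_sq_nonneg v). nra.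
Qed.

Lemma Cmod_mult_conj_le (u v : C) : Cmod (Cmult u (Cconj v)) <= (Cmod u ^ 2 + Cmod v ^ 2) / 2.
Proof. rewrite Cmod_mult, Cmod_conj. pose proof (pow2_ge_0 (Cmod u - Cmod v)). nra. Qed.

Lemma sum_f_R0_single (a : nat -> R) (m : nat) :
  (forall k, k <> m -> a k = 0) -> forall n, sum_f_R0 a n = if (m <=? n)%nat then a m else 0.
Proof.
  intros H n; induction n; simpl.
  - destruct m; simpl. reflexivity. apply H; lia.
  - rewrite IHn. destruct (Nat.leb_spec m n), (Nat.leb_spec m (S n)); try lia.
    + rewrite (H (S n)) by lia. ring.
    + assert (m = S n) by lia. subst. ring.
    + rewrite (H (S n)) by lia. ring.
Qed.

Lemma is_series_single (a : nat -> R) (m : nat) :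
  (forall k, k <> m -> a k = 0) -> is_series a (a m).
Proof.
  intros H. apply is_series_Reals. intros eps Heps. exists m. intros n Hn.
  rewrite (sum_f_R0_single a m H n). destruct (Nat.leb_spec m n); try lia.
  unfold Rdist. rewrite Rminus_diag, Rabs_R0. lra.
Qed.

Lemma Series_single (a : nat -> R) (m : nat) :
  (forall k, k <> m -> a k = 0) -> Series a = a m.
Proof. intros H. apply is_series_unique, is_series_single, H. Qed.

Lemma ex_series_single (a : nat -> R) (m : nat) :
  (forall k, k <> m -> a k = 0) -> ex_series a.
Proof. intros H. eexists. apply is_series_single with (m := m), H. Qed.

Lemma Series_support2 (u : nat -> R) (p q : nat) : p <> q ->
  (forall k, k <> p -> k <> q -> u k = 0) -> Series u = u p + u q.
Proof.
  intros Hpq H.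
  set (u1 := fun k => if Nat.eqb k p then u k else 0).
  set (u2 := fun k => if Nat.eqb k q then u k else 0).
  assert (E : forall k, u k = u1 k + u2 k).
  { intros k. unfold u1, u2. destruct (Nat.eqb_spec k p), (Nat.eqb_spec k q); subst;
    try tauto; try ring.
    rewrite H; auto; ring. }
  assert (E1 : forall k, k <> p -> u1 k = 0) by
    (intros k Hk; unfold u1; destruct (Nat.eqb_spec k p); tauto).
  assert (E2 : forall k, k <> q -> u2 k = 0) by
    (intros k Hk; unfold u2; destruct (Nat.eqb_spec k q); tauto).
  rewrite (Series_ext _ _ E), Series_plus, (Series_single _ _ E1), (Series_single _ _ E2).
  unfold u1, u2. rewrite !Nat.eqb_refl. reflexivity.
  apply (ex_series_single _ _ E1). apply (ex_series_single _ _ E2).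
Qed.

Lemma Series_ge_term (a : nat -> R) (j : nat) :
  ex_series a -> (forall k, 0 <= a k) -> a j <= Series a.
Proof.
  intros Ha Hp.
  assert (E : Series (fun k => if Nat.eqb k j then a k else 0) = a j).
  { rewrite (Series_single _ j). now rewrite Nat.eqb_refl.
    intros k Hk. destruct (Nat.eqb_spec k j); tauto. }
  rewrite <- E. apply Series_le; auto. intros k. destruct (Nat.eqb_spec k j); split; auto; lra.
Qed.

Lemma Series_nonneg (a : nat -> R) : ex_series a -> (forall k, 0 <= a k) -> 0 <= Series a.
Proof.
  intros He H. rewrite <- (Series_single (fun _ => 0) 0) by auto.
  apply Series_le; auto. intros; split; auto; lra.
Qed.

Lemma ex_series_le_R (a b : nat -> R) : (forall n, Rabs (a n) <= b n) -> ex_series b -> ex_series a.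
Proof. intros H Hb. apply (@ex_series_le R_AbsRing R_CompleteNormedModule a b); auto. Qed.

Lemma sum_f_R0_tail (b : nat -> R) (M : nat) : forall n, (M <= n)%nat ->
  sum_f_R0 (fun k => if (k <? S M)%nat then 0 else b k) n = sum_f_R0 b n - sum_f_R0 b M.
Proof.
  intros n Hn. induction Hn.
  - assert (G : forall n, (n <= M)%nat -> sum_f_R0
      (fun k => if (k <? S M)%nat then 0 else b k) n = 0).
    { induction n; intros Hn; simpl. destruct (Nat.ltb_spec 0 (S M)); try lia; auto.
      rewrite IHn by lia. destruct (Nat.ltb_spec (S n) (S M)); try lia; ring. }
    rewrite G by lia. ring.
  - simpl. rewrite IHHn. destruct (Nat.ltb_spec (S m) (S M)); try lia. ring.
Qed.

Lemma is_series_indicator_lt (M : nat) (d : R) :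
  is_series (fun j => if (j <? M)%nat then d else 0) (INR M * d).
Proof.
  induction M.
  - simpl. rewrite Rmult_0_l. apply (is_series_single (fun _ => 0) 0). auto.
  - assert (H1 : is_series (fun j => if (j =? M)%nat then d else 0) d).
    { pose proof (is_series_single (fun j => if (j =? M)%nat then d else 0) M) as H.
      cbv beta in H. rewrite Nat.eqb_refl in H. apply H.
      intros k Hk. destruct (Nat.eqb_spec k M); tauto. }
    pose proof (is_series_plus _ _ _ _ IHM H1) as H2.
    replace (INR (S M) * d) with (INR M * d + d) by (rewrite S_INR; ring).
    eapply is_series_ext. 2: exact H2.
    intros j. change (plus ?x ?y) with (x + y). cbv beta.
    destruct (Nat.ltb_spec j M), (Nat.eqb_spec j M), (Nat.ltb_spec j (S M)); try lia; try ring;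
      try apply Rplus_0_r; apply Rplus_0_l.
Qed.

Definition pair_sums (a : nat -> R) : nat -> R := fun n => a (2 * n)%nat + a (2 * n + 1)%nat.

Lemma sum_f_R0_pair_sums (a : nat -> R) n : sum_f_R0 (pair_sums a) n = sum_f_R0 a (2 * n + 1).
Proof.
  induction n. unfold pair_sums; simpl; reflexivity.
  rewrite tech5, IHn. replace (2 * S n + 1)%nat with (S (S (2 * n + 1))) by lia.
  rewrite !tech5. unfold pair_sums. replace (2 * S n)%nat with (S (2 * n + 1)) by lia.
  replace (S (2 * n + 1) + 1)%nat with (S (S (2 * n + 1))) by lia. ring.
Qed.

Lemma is_series_pair_sums (a : nat -> R) l : is_series a l -> is_series (pair_sums a) l.
Proof.
  rewrite !is_series_Reals. intros H eps Heps. destruct (H eps Heps) as [N HN].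
  exists N. intros n Hn. rewrite sum_f_R0_pair_sums. apply HN. lia.
Qed.

Lemma Series_pair_sums (f : nat -> R) : ex_series f -> Series f = Series (pair_sums f).
Proof.
  intros [l Hl]. rewrite (is_series_unique _ _ Hl). symmetry.
  apply is_series_unique, is_series_pair_sums, Hl.
Qed.

Lemma is_series_of_pair_sums (a : nat -> R) l :
  (forall k, 0 <= a k) -> is_series (pair_sums a) l -> is_series a l.
Proof.
  intros Hp H.
  assert (H0 : is_lim_seq (pair_sums a) 0) by (apply ex_series_lim_0; eexists; eauto).
  apply is_lim_seq_spec in H0.
  rewrite is_series_Reals in *. intros eps Heps.
  destruct (H (eps/2) ltac:(lra)) as [N1 HN1].
  destruct (H0 (mkposreal (eps/2) ltac:(lra))) as [N2 HN2]. simpl in HN2.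
  exists (2 * (N1 + N2) + 2)%nat. intros n Hn.
  set (m := (n / 2)%nat).
  assert (Hm1 : (m >= N1)%nat) by (pose proof (div2_cases n); unfold m; lia).
  assert (Hm2 : (N2 <= m)%nat) by (pose proof (div2_cases n); unfold m; lia).
  specialize (HN1 m Hm1). specialize (HN2 m Hm2). rewrite sum_f_R0_pair_sums in HN1.
  unfold Rdist in *. rewrite Rminus_0_r in HN2.
  pose proof (Hp (2 * m)%nat). pose proof (Hp (2 * m + 1)%nat).
  rewrite Rabs_pos_eq in HN2 by (unfold pair_sums; lra).
  unfold pair_sums in HN2. apply Rabs_def2 in HN1.
  destruct (div2_cases n) as [E | E]; fold m in E.
  - assert (Hs : sum_f_R0 a (2 * m + 1) = sum_f_R0 a n + a (2 * m + 1)%nat).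
    { rewrite E. replace (2 * m + 1)%nat with (S (2 * m)) by lia. simpl. reflexivity. }
    apply Rabs_def1; lra.
  - rewrite E. apply Rabs_def1; lra.
Qed.

Definition vsub (x y : vec) : vec := vadd x (vscal (RtoC (-1)) y).

Lemma vec_ext (x y : vec) : (forall k, x k = y k) -> x = y.
Proof. intros; apply functional_extensionality; auto. Qed.

Lemma l2_vzero : l2 vzero.
Proof.
  unfold l2, vzero. apply ex_series_single with (m := 0%nat). intros. rewrite Cmod_0. ring.
Qed.

Lemma l2_e (k : nat) : l2 (e k).
Proof.
  unfold l2, e. apply ex_series_single with (m := k). intros j Hj.
  destruct (Nat.eqb_spec j k); try tauto. rewrite Cmod_0. ring.
Qed.

Lemma l2_vadd (x y : vec) : l2 x -> l2 y -> l2 (vadd x y).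
Proof.
  unfold l2, vadd. intros Hx Hy.
  apply (ex_series_le_R _ (fun k => 2 * Cmod (x k) ^ 2 + 2 * Cmod (y k) ^ 2)).
  - intros n. rewrite Rabs_pos_eq by apply Cmod_sq_nonneg.
    apply Cmod_sq_add.
  - destruct Hx as [lx Hx], Hy as [ly Hy]. eexists.
    apply (is_series_plus (fun k => 2 * Cmod (x k) ^ 2) (fun k => 2 * Cmod (y k) ^ 2)).
    apply (is_series_scal_l 2 _ _ Hx). apply (is_series_scal_l 2 _ _ Hy).
Qed.

Lemma l2_vscal (c : C) (x : vec) : l2 x -> l2 (vscal c x).
Proof.
  unfold l2, vscal. intros [lx Hx]. exists (Cmod c ^ 2 * lx).
  eapply is_series_ext. 2: apply (is_series_scal_l (Cmod c ^ 2) _ _ Hx).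
  intros n. rewrite Cmod_sq_mult. reflexivity.
Qed.

Lemma norm2_nonneg (x : vec) : 0 <= norm2 x.
Proof. unfold norm2. apply sqrt_pos. Qed.

Lemma Cmod_coord_le_norm2 (x : vec) (j : nat) : l2 x -> Cmod (x j) <= norm2 x.
Proof.
  intros Hx. unfold norm2. rewrite <- (sqrt_pow2 (Cmod (x j))) by apply Cmod_ge_0.
  apply sqrt_le_1_alt. apply (Series_ge_term (fun k => Cmod (x k) ^ 2)); auto.
  intros; apply Cmod_sq_nonneg.
Qed.

Lemma norm2_e (k : nat) : norm2 (e k) = 1.
Proof.
  unfold norm2. rewrite (Series_single _ k).
  - unfold e. rewrite Nat.eqb_refl. rewrite Cmod_1. rewrite pow1. apply sqrt_1.
  - intros j Hj. unfold e. destruct (Nat.eqb_spec j k); try tauto. rewrite Cmod_0. ring.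
Qed.

Lemma l2_pairwise_dominated (x y : vec) (c : nat -> R) (Sc C0 : R) : l2 x -> 0 <= C0 ->
  (forall k, 0 <= c k) -> is_series c Sc ->
  (forall j, Cmod (y j) ^ 2 <= c j + C0 * pair_sums (fun k => Cmod (x k) ^ 2) (j / 2)) ->
  l2 y /\ Series (fun k => Cmod (y k) ^ 2) <= Sc + 2 * C0 * Series (fun k => Cmod (x k) ^ 2).
Proof.
  intros Hx HC Hc0 Hc Hy.
  set (a := fun k => Cmod (y k) ^ 2). set (b := fun k => Cmod (x k) ^ 2).
  assert (Hpa : forall k, 0 <= a k) by (intros; apply Cmod_sq_nonneg).
  assert (Hpb : forall k, 0 <= b k) by (intros; apply Cmod_sq_nonneg).
  assert (Hcmp : forall n, pair_sums a n <= pair_sums c n + 2 * C0 * pair_sums b n).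
  { intros n. pose proof (Hy (2 * n)%nat). pose proof (Hy (2 * n + 1)%nat).
    rewrite double_div2 in *. rewrite double_succ_div2 in *. unfold pair_sums, a, b in *. lra. }
  destruct Hx as [lb Hb]. pose proof (is_series_pair_sums _ _ Hb) as Hpb2.
  pose proof (is_series_pair_sums _ _ Hc) as Hpc2.
  assert (Hrhs : is_series (fun n => pair_sums c n + 2 * C0 * pair_sums b n) (Sc + 2 * C0 * lb)).
  { apply (is_series_plus (pair_sums c) (fun n => 2 * C0 * pair_sums b n)). auto.
    apply (is_series_scal_l (2 * C0) _ _ Hpb2). }
  assert (Hea : ex_series (pair_sums a)).
  { apply (ex_series_le_R _ (fun n => pair_sums c n + 2 * C0 * pair_sums b n)).
    - intros n. rewrite Rabs_pos_eq. apply Hcmp.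
      unfold pair_sums. pose proof (Hpa (2*n)%nat). pose proof (Hpa (2*n+1)%nat). lra.
    - eexists; eauto. }
  destruct Hea as [la Hla].
  pose proof (is_series_of_pair_sums a la Hpa Hla) as Ha.
  split. eexists; exact Ha.
  change (Series a <= Sc + 2 * C0 * Series b).
  assert (Eb : Series b = lb) by (apply is_series_unique; exact Hb).
  rewrite (is_series_unique _ _ Ha), Eb.
  rewrite <- (is_series_unique _ _ Hla), <- (is_series_unique _ _ Hrhs).
  apply Series_le.
  - intros n. split; [|apply Hcmp].
    unfold pair_sums. pose proof (Hpa (2*n)%nat). pose proof (Hpa (2*n+1)%nat). lra.
  - eexists; eauto.
Qed.

Lemma norm2_pairwise_dominated (x y : vec) (C0 : R) : l2 x -> 0 <= C0 ->
  (forall j, Cmod (y j) ^ 2 <= C0 * pair_sums (fun k => Cmod (x k) ^ 2) (j / 2)) ->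
  l2 y /\ norm2 y <= sqrt (2 * C0) * norm2 x.
Proof.
  intros Hx HC Hy.
  destruct (l2_pairwise_dominated x y (fun _ => 0) 0 C0 Hx HC) as [H1 H2].
  - intros; lra.
  - apply (is_series_single (fun _ => 0) 0). auto.
  - intros j. rewrite Rplus_0_l. auto.
  - split; auto. unfold norm2. rewrite <- sqrt_mult_alt by lra. apply sqrt_le_1_alt. lra.
Qed.

Lemma inner_support1 (y v : vec) (p : nat) :
  (forall k, k <> p -> Cmult (y k) (Cconj (v k)) = RtoC 0) ->
  inner y v = Cmult (y p) (Cconj (v p)).
Proof.
  intros H. unfold inner. apply C_ext; cbn [fst snd].
  - rewrite (Series_single _ p). reflexivity. intros k Hk. rewrite (H k Hk). reflexivity.
  - rewrite (Series_single _ p). reflexivity. intros k Hk. rewrite (H k Hk). reflexivity.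
Qed.

Lemma inner_support2 (y v : vec) (p q : nat) : p <> q ->
  (forall k, k <> p -> k <> q -> Cmult (y k) (Cconj (v k)) = RtoC 0) ->
  inner y v = Cplus (Cmult (y p) (Cconj (v p))) (Cmult (y q) (Cconj (v q))).
Proof.
  intros Hpq H. unfold inner. apply C_ext; cbn [fst snd].
  - rewrite (Series_support2 _ p q Hpq). reflexivity.
    intros k Hk1 Hk2. rewrite (H k Hk1 Hk2). reflexivity.
  - rewrite (Series_support2 _ p q Hpq). reflexivity.
    intros k Hk1 Hk2. rewrite (H k Hk1 Hk2). reflexivity.
Qed.

Lemma inner_e_r (x : vec) (m : nat) : inner x (e m) = x m.
Proof.
  rewrite (inner_support1 _ _ m).
  - unfold e. rewrite Nat.eqb_refl, Cconj_RtoC. ring.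
  - intros k Hk. unfold e. destruct (Nat.eqb_spec k m); try tauto. rewrite Cconj_RtoC. ring.
Qed.

Lemma inner_e_l (y : vec) (k : nat) : inner (e k) y = Cconj (y k).
Proof.
  rewrite (inner_support1 _ _ k).
  - unfold e. rewrite Nat.eqb_refl. ring.
  - intros j Hj. unfold e. destruct (Nat.eqb_spec j k); try tauto. ring.
Qed.

Definition trunc (N : nat) (x : vec) : vec := fun k => if (k <? N)%nat then x k else RtoC 0.

Lemma trunc_S N x : trunc (S N) x = vadd (trunc N x) (vscal (x N) (e N)).
Proof.
  apply vec_ext; intros k. unfold trunc, vadd, vscal, e.
  destruct (Nat.ltb_spec k (S N)), (Nat.ltb_spec k N), (Nat.eqb_spec k N); subst; try lia; ring.
Qed.

Lemma trunc_0 x : trunc 0 x = vzero.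
Proof. apply vec_ext; intros k. reflexivity. Qed.

Lemma l2_trunc N x : l2 (trunc N x).
Proof.
  induction N. rewrite trunc_0. apply l2_vzero.
  rewrite trunc_S. apply l2_vadd; auto. apply l2_vscal, l2_e.
Qed.

Lemma norm2_tail_small (x : vec) : l2 x ->
  forall eps, 0 < eps -> exists N0, forall N, (N0 <= N)%nat -> norm2 (vsub x (trunc N x)) <= eps.
Proof.
  intros [l Hl] eps Heps. pose proof Hl as Hl'. apply is_series_Reals in Hl.
  destruct (Hl (eps ^ 2) ltac:(nra)) as [N1 HN1]. exists (S N1). intros N HN.
  destruct N as [|M]; [lia|].
  assert (E : forall k, Cmod (vsub x (trunc (S M) x) k) ^ 2 = if (k <? S M)%nat then 0
    else Cmod (x k) ^ 2).
  { intros k. unfold vsub, vadd, vscal, trunc. destruct (Nat.ltb_spec k (S M)).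
    - replace (Cplus (x k) (Cmult (RtoC (-1)) (x k))) with (RtoC 0) by ring. rewrite Cmod_0. ring.
    - replace (Cplus (x k) (Cmult (RtoC (-1)) (RtoC 0))) with (x k) by ring. reflexivity. }
  assert (Hs : is_series (fun k => if (k <? S M)%nat then 0 else Cmod (x k) ^ 2)
    (l - sum_f_R0 (fun k => Cmod (x k) ^ 2) M)).
  { apply is_series_Reals. intros ep Hep. destruct (Hl ep Hep) as [N2 HN2]. exists (N2 + M)%nat.
    intros n Hn. rewrite sum_f_R0_tail by lia. specialize (HN2 n ltac:(lia)). unfold Rdist in *.
    replace (sum_f_R0 (fun k => Cmod (x k) ^ 2) n - sum_f_R0 (fun k => Cmod (x k) ^ 2) M -
        (l - sum_f_R0 (fun k => Cmod (x k) ^ 2) M)) with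
          (sum_f_R0 (fun k => Cmod (x k) ^ 2) n - l) by ring.
    auto. }
  unfold norm2. rewrite (Series_ext _ _ E). erewrite is_series_unique by exact Hs.
  specialize (HN1 M ltac:(lia)). unfold Rdist in HN1. apply Rabs_def2 in HN1.
  rewrite <- (sqrt_pow2 eps) by lra. apply sqrt_le_1_alt. lra.
Qed.

Lemma Series_sq_le_1 (x : vec) : l2 x -> norm2 x <= 1 -> Series (fun k => Cmod (x k) ^ 2) <= 1.
Proof.
  intros Hx Hn. unfold norm2 in Hn. pose proof (Series_nonneg _ Hx (fun k => Cmod_sq_nonneg (x k))).
  rewrite <- (sqrt_1) in Hn. apply sqrt_le_0 in Hn; lra.
Qed.

Lemma Series_sq_vsub_le (x y : vec) : l2 x -> l2 y ->
  Series (fun k => Cmod (vsub x y k) ^ 2)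
    <= 2 * Series (fun k => Cmod (x k) ^ 2) + 2 * Series (fun k => Cmod (y k) ^ 2).
Proof.
  intros Hx Hy. rewrite <- !Series_scal_l, <- Series_plus.
  - apply Series_le. intros k; split. apply Cmod_sq_nonneg. unfold vsub, vadd, vscal.
    eapply Rle_trans. apply Cmod_sq_add. rewrite Cmod_sq_mult, Cmod_R, Rabs_m1. lra.
    destruct Hx as [lx Hx], Hy as [ly Hy]. eexists.
    apply (is_series_plus (fun k => 2 * Cmod (x k) ^ 2) (fun k => 2 * Cmod (y k) ^ 2)).
    apply (is_series_scal_l 2 _ _ Hx). apply (is_series_scal_l 2 _ _ Hy).
  - destruct Hx as [lx Hx]. eexists. apply (is_series_scal_l 2 _ _ Hx).
  - destruct Hy as [ly Hy]. eexists. apply (is_series_scal_l 2 _ _ Hy).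
Qed.

Lemma ex_series_inner (u v : vec) : l2 u -> l2 v ->
  ex_series (fun k => Re (Cmult (u k) (Cconj (v k))))
    /\ ex_series (fun k => Im (Cmult (u k) (Cconj (v k)))).
Proof.
  intros [lu Hu] [lv Hv].
  assert (Hs : ex_series (fun k => (Cmod (u k) ^ 2 + Cmod (v k) ^ 2) / 2)).
  { eexists. eapply is_series_ext.
    2: apply (is_series_scal_l (/ 2) _ _ (is_series_plus _ _ _ _ Hu Hv)).
    intros k. change (scal (/ 2) (plus (Cmod (u k) ^ 2) (Cmod (v k) ^ 2))) with
      (/ 2 * (Cmod (u k) ^ 2 + Cmod (v k) ^ 2)).
    unfold Rdiv. apply Rmult_comm. }
  split; apply (ex_series_le_R _ (fun k => (Cmod (u k) ^ 2 + Cmod (v k) ^ 2) / 2)); auto; intros k;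
    (eapply Rle_trans; [|apply Cmod_mult_conj_le]).
  apply re_le_Cmod. apply im_le_Cmod.
Qed.


(** * Bounded operators and their matrix entries *)

Definition entry (T : op) (k m : nat) : C := T (e k) m.

Lemma entry_opadd T U k j : entry (opadd T U) k j = Cplus (entry T k j) (entry U k j).
Proof. reflexivity. Qed.

Lemma entry_opscal c T k j : entry (opscal c T) k j = Cmult c (entry T k j).
Proof. reflexivity. Qed.

Section BoundedOp.
Variable T : op.
Hypothesis HT : bounded_op T.

Lemma bounded_op_l2 x : l2 x -> l2 (T x).
Proof. apply HT. Qed.

Lemma bounded_op_linear x y c : l2 x -> l2 y -> T (vadd x (vscal c y)) = vadd (T x) (vscal c (T y)).
Proof. apply HT. Qed.

Lemma bounded_op_not_l2 x : ~ l2 x -> T x = vzero.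
Proof. apply HT. Qed.

Lemma bounded_op_vzero : T vzero = vzero.
Proof.
  pose proof (bounded_op_linear vzero vzero (RtoC (-1)) l2_vzero l2_vzero) as H.
  replace (vadd vzero (vscal (RtoC (-1)) vzero)) with vzero in H
    by (apply vec_ext; intros; unfold vadd, vscal, vzero; ring).
  apply vec_ext; intros k. apply (f_equal (fun v => v k)) in H. unfold vadd, vscal in H.
  unfold vzero. change (T vzero k = Cplus (T vzero k) (Cmult (RtoC (-1)) (T vzero k))) in H.
  rewrite H at 1. ring.
Qed.

Lemma bounded_op_vadd x y : l2 x -> l2 y -> T (vadd x y) = vadd (T x) (T y).
Proof.
  intros Hx Hy. pose proof (bounded_op_linear x y (RtoC 1) Hx Hy) as H.
  replace (vscal (RtoC 1) y) with y in H by (apply vec_ext; intros; unfold vscal; ring).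
  rewrite H. apply vec_ext; intros; unfold vadd, vscal; ring.
Qed.

Lemma bounded_op_vscal x c : l2 x -> T (vscal c x) = vscal c (T x).
Proof.
  intros Hx. pose proof (bounded_op_linear vzero x c l2_vzero Hx) as H.
  replace (vadd vzero (vscal c x)) with (vscal c x) in H by
    (apply vec_ext; intros; unfold vadd, vzero; ring).
  rewrite H, bounded_op_vzero. apply vec_ext; intros; unfold vadd, vzero; ring.
Qed.

Lemma bounded_op_vsub x y : l2 x -> l2 y -> T (vsub x y) = vsub (T x) (T y).
Proof. intros; unfold vsub; apply bounded_op_linear; auto. Qed.

Lemma bounded_op_norm_bound : exists M, 0 <= M /\ forall x, l2 x -> norm2 (T x) <= M * norm2 x.
Proof.
  destruct HT as (_ & _ & _ & M & HM). exists (Rmax M 0). split. apply Rmax_r.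
  intros x Hx. eapply Rle_trans. apply HM; auto. apply Rmult_le_compat_r.
    apply norm2_nonneg. apply Rmax_l.
Qed.

Lemma entry_bounded M :
  (forall x, l2 x -> norm2 (T x) <= M * norm2 x) -> forall k m, Cmod (entry T k m) <= M.
Proof.
  intros HM k m. unfold entry. eapply Rle_trans. apply Cmod_coord_le_norm2, bounded_op_l2, l2_e.
  rewrite <- (Rmult_1_r M), <- (norm2_e k). apply HM, l2_e.
Qed.

Fixpoint Csum_upto (f : nat -> C) (N : nat) : C :=
  match N with O => RtoC 0 | S N => Cplus (Csum_upto f N) (f N) end.

Lemma bounded_op_trunc_apply N x j :
  T (trunc N x) j = Csum_upto (fun k => Cmult (x k) (entry T k j)) N.
Proof.
  induction N; simpl.
  - rewrite trunc_0, bounded_op_vzero by auto. reflexivity.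
  - rewrite trunc_S, bounded_op_vadd, bounded_op_vscal; auto using l2_trunc, l2_e, l2_vscal.
    unfold vadd, vscal. rewrite IHN. reflexivity.
Qed.

Lemma bounded_op_trunc_close x j : l2 x -> forall eps, 0 < eps ->
  exists N0, forall N, (N0 <= N)%nat ->
  Cmod (Cplus (T x j) (Cmult (RtoC (-1)) (T (trunc N x) j))) <= eps.
Proof.
  intros Hx eps Heps. destruct bounded_op_norm_bound as (M & HM0 & HM).
  destruct (norm2_tail_small x Hx (eps / (M + 1))) as [N0 HN0]. apply Rdiv_lt_0_compat; lra.
  exists N0. intros N HN.
  assert (Hd : l2 (vsub x (trunc N x))) by (apply l2_vadd; auto; apply l2_vscal, l2_trunc).
  change (Cplus (T x j) (Cmult (RtoC (-1)) (T (trunc N x) j))) with (vsub (T x) (T (trunc N x)) j).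
  rewrite <- bounded_op_vsub by auto using l2_trunc.
  eapply Rle_trans. apply Cmod_coord_le_norm2, bounded_op_l2, Hd.
  eapply Rle_trans. apply HM, Hd.
  apply Rle_trans with ((M + 1) * (eps / (M + 1))); [|right; field; lra].
  apply Rmult_le_compat; auto using norm2_nonneg; lra.
Qed.

End BoundedOp.

Lemma Csum_upto_support2 (f : nat -> C) (p N : nat) : (p + 1 < N)%nat ->
  (forall k, k <> p -> k <> (p + 1)%nat -> f k = RtoC 0) ->
  Csum_upto f N = Cplus (f p) (f (p + 1)%nat).
Proof.
  intros HN Hf.
  assert (G : forall N, Csum_upto f N =
    Cplus (if (p <? N)%nat then f p else RtoC 0)
          (if (p + 1 <? N)%nat then f (p + 1)%nat else RtoC 0)).
  { induction N0 as [|N0 IH]; simpl. apply C_ext; simpl; ring.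
    rewrite IH.
    destruct (Nat.eq_dec N0 p) as [->|Hp]; [|destruct (Nat.eq_dec N0 (p + 1)) as [->|Hp1]];
      [| |rewrite (Hf N0 Hp Hp1)];
      repeat match goal with |- context [(?a <? ?b)%nat] => destruct (Nat.ltb_spec a b) end;
      try lia; ring. }
  rewrite G. destruct (Nat.ltb_spec p N), (Nat.ltb_spec (p + 1) N); try lia. reflexivity.
Qed.

Lemma A0_entry_off_block (T : op) : A0 T ->
  forall k m, (k / 2)%nat <> (m / 2)%nat -> entry T k m = RtoC 0.
Proof.
  intros [_ H] k m Hkm. destruct (Ceq_dec (entry T k m) (RtoC 0)) as [E|E]; auto.
  exfalso. specialize (H k m). rewrite inner_e_r in H. destruct (H E) as (n & H1 & H2).
  apply in_block_iff_div2 in H1, H2. congruence.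
Qed.

Lemma block_zero_entry T n :
  block_zero T n <-> forall k j, (k / 2 = n)%nat -> (j / 2 = n)%nat -> entry T k j = RtoC 0.
Proof.
  unfold block_zero. split.
  - intros H k j Hk Hj. rewrite <- inner_e_r. apply H; apply in_block_iff_div2; auto.
  - intros H k j Hk Hj. rewrite inner_e_r. apply H; apply in_block_iff_div2; auto.
Qed.

Lemma adjoint_entry T T' : bounded_op T -> bounded_op T' -> is_adjoint T T' ->
  forall k j, entry T' k j = Cconj (entry T j k).
Proof.
  intros HT HT' Had k j. specialize (Had (e j) (e k) (l2_e j) (l2_e k)).
  rewrite inner_e_r, inner_e_l in Had. unfold entry. rewrite Had, Cconj_conj. reflexivity.
Qed.

Lemma entry_diff_bound T U eps : bounded_op T -> bounded_op U ->
  (forall x, l2 x -> norm2 (vadd (T x) (vscal (RtoC (-1)) (U x))) <= eps * norm2 x) ->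
  forall k j, Cmod (Cplus (entry T k j) (Cmult (RtoC (-1)) (entry U k j))) <= eps.
Proof.
  intros HT HU H k j. specialize (H (e k) (l2_e k)). rewrite norm2_e, Rmult_1_r in H.
  eapply Rle_trans. 2: exact H.
  apply (Cmod_coord_le_norm2 (vadd (T (e k)) (vscal (RtoC (-1)) (U (e k)))) j).
  apply l2_vadd. apply HT, l2_e. apply l2_vscal, HU, l2_e.
Qed.

(** * Block-diagonal operators *)

(* [m k j] is the [j]-th coordinate of the image of [e k]; only the entries with
   [k], [j] in a common block [{2n, 2n+1}] are ever used. *)
Definition bmat := nat -> nat -> C.

Definition block_apply (m : bmat) (x : vec) (j : nat) : C :=
  Cplus (Cmult (x (2 * (j / 2))%nat) (m (2 * (j / 2))%nat j))
        (Cmult (x (2 * (j / 2) + 1)%nat) (m (2 * (j / 2) + 1)%nat j)).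

Lemma A0_apply_block (T : op) : A0 T ->
  forall x, l2 x -> forall j, T x j = block_apply (entry T) x j.
Proof.
  intros HA x Hx j. pose proof (proj1 HA) as HT.
  set (p := (2 * (j / 2))%nat).
  assert (Htr : forall N, (p + 1 < N)%nat -> T (trunc N x) j = block_apply (entry T) x j).
  { intros N HN. rewrite bounded_op_trunc_apply by auto.
    rewrite (Csum_upto_support2 _ p N HN). reflexivity.
    intros k Hk1 Hk2. rewrite (A0_entry_off_block T HA k j). ring.
    pose proof (div2_cases k). pose proof (div2_cases j). unfold p in *. lia. }
  assert (D : Cplus (T x j) (Cmult (RtoC (-1)) (block_apply (entry T) x j)) = RtoC 0).
  { apply Cmod_small_eq0. intros eps Heps.
    destruct (bounded_op_trunc_close T HT x j Hx eps Heps) as [N0 HN0].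
    rewrite <- (Htr (N0 + p + 2)%nat) by lia. apply HN0; lia. }
  replace (T x j) with (Cplus (Cplus (T x j) (Cmult (RtoC (-1)) (block_apply (entry T) x j)))
    (block_apply (entry T) x j)) by ring.
  rewrite D. ring.
Qed.

Definition block_op (m : bmat) : op := fun x =>
  if excluded_middle_informative (l2 x) then block_apply m x else vzero.

Definition bmat_bounded (m : bmat) (B : R) : Prop := forall k j, Cmod (m k j) <= B.

Lemma bmat_bounded_nonneg m B : bmat_bounded m B -> 0 <= B.
Proof. intros H. pose proof (H 0%nat 0%nat). pose proof (Cmod_ge_0 (m 0%nat 0%nat)). lra. Qed.

Lemma block_apply_bound m B x : bmat_bounded m B -> l2 x ->
  l2 (block_apply m x) /\ norm2 (block_apply m x) <= sqrt (2 * (2 * B ^ 2)) * norm2 x.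
Proof.
  intros Hm Hx. apply norm2_pairwise_dominated; auto. pose proof (pow2_ge_0 B); lra.
  intros j. unfold block_apply, pair_sums. apply Cmod_lin2_sq; apply Hm.
Qed.

Lemma block_apply_linear m x y c : block_apply m (vadd x (vscal c y))
  = vadd (block_apply m x) (vscal c (block_apply m y)).
Proof. apply vec_ext; intros j. unfold block_apply, vadd, vscal. ring. Qed.

Lemma block_op_bounded m B : bmat_bounded m B -> bounded_op (block_op m).
Proof.
  intros Hm. unfold bounded_op, block_op. split; [|split; [|split]].
  - intros x Hx. destruct (excluded_middle_informative (l2 x)); tauto.
  - intros x Hx. destruct (excluded_middle_informative (l2 x)); try tauto.
    apply (block_apply_bound m B); auto.
  - intros x y c Hx Hy. pose proof (l2_vadd _ _ Hx (l2_vscal c _ Hy)).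
    destruct (excluded_middle_informative (l2 (vadd x (vscal c y)))); try tauto.
    destruct (excluded_middle_informative (l2 x)); try tauto.
    destruct (excluded_middle_informative (l2 y)); try tauto. apply block_apply_linear.
  - exists (sqrt (2 * (2 * B ^ 2))). intros x Hx.
    destruct (excluded_middle_informative (l2 x)); try tauto. apply (block_apply_bound m B); auto.
Qed.

Lemma block_op_l2 m x : l2 x -> block_op m x = block_apply m x.
Proof. intros Hx. unfold block_op. destruct (excluded_middle_informative (l2 x)); tauto. Qed.

Lemma block_apply_e m k j :
  block_apply m (e k) j = if (k / 2 =? j / 2)%nat then m k j else RtoC 0.
Proof.
  unfold block_apply, e. pose proof (div2_cases k). pose proof (div2_cases j).
  destruct (Nat.eqb_spec (k / 2) (j / 2)) as [E|E].
  - destruct H as [H|H].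
    + rewrite Nat.eqb_sym, (proj2 (Nat.eqb_eq _ _)) by lia.
      replace (Nat.eqb (2 * (j / 2) + 1) k) with false by (symmetry; apply Nat.eqb_neq; lia).
      replace (2 * (j / 2))%nat with k by lia. ring.
    + replace (Nat.eqb (2 * (j / 2)) k) with false by (symmetry; apply Nat.eqb_neq; lia).
      rewrite (proj2 (Nat.eqb_eq (2 * (j / 2) + 1) k)) by lia.
      replace (2 * (j / 2) + 1)%nat with k by lia. ring.
  - replace (Nat.eqb (2 * (j / 2)) k) with false by (symmetry; apply Nat.eqb_neq; lia).
    replace (Nat.eqb (2 * (j / 2) + 1) k) with false by (symmetry; apply Nat.eqb_neq; lia). ring.
Qed.

Lemma entry_block_op m k j :
  entry (block_op m) k j = if (k / 2 =? j / 2)%nat then m k j else RtoC 0.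
Proof. unfold entry. rewrite block_op_l2 by apply l2_e. apply block_apply_e. Qed.

Lemma block_op_A0 m B : bmat_bounded m B -> A0 (block_op m).
Proof.
  intros Hm. split. apply (block_op_bounded m B Hm).
  intros k j H. rewrite inner_e_r in H. change (entry (block_op m) k j <> RtoC 0) in H.
  rewrite entry_block_op in H. destruct (Nat.eqb_spec (k / 2) (j / 2)) as [E|E]; try tauto.
  exists (k / 2)%nat. split; apply in_block_iff_div2; auto.
Qed.

Lemma A0_block_op_entry (T : op) : A0 T -> T = block_op (entry T).
Proof.
  intros HA. apply functional_extensionality; intros x. unfold block_op.
  destruct (excluded_middle_informative (l2 x)) as [Hx|Hx].
  - apply vec_ext; intros j. apply A0_apply_block; auto.
  - apply (bounded_op_not_l2 T (proj1 HA)); auto.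
Qed.

Lemma block_apply_ext m1 m2 x : (forall k j, (k / 2 = j / 2)%nat -> m1 k j = m2 k j) ->
  block_apply m1 x = block_apply m2 x.
Proof.
  intros H. apply vec_ext; intros j. unfold block_apply. rewrite !H. reflexivity.
  rewrite double_succ_div2; auto. rewrite double_div2; auto.
Qed.

Lemma block_op_ext m1 m2 :
  (forall k j, (k / 2 = j / 2)%nat -> m1 k j = m2 k j) -> block_op m1 = block_op m2.
Proof.
  intros H. apply functional_extensionality; intros x. unfold block_op.
  destruct (excluded_middle_informative (l2 x)); auto. apply block_apply_ext; auto.
Qed.

Lemma A0_entry_bounded (T : op) : A0 T -> exists B, bmat_bounded (entry T) B.
Proof.
  intros HA. destruct (bounded_op_norm_bound T (proj1 HA)) as (M & _ & HM).
  exists M. intros k j. apply (entry_bounded T (proj1 HA) M HM).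
Qed.

Lemma bmat_bounded_add m1 m2 B1 B2 : bmat_bounded m1 B1 -> bmat_bounded m2 B2 ->
  bmat_bounded (fun k j => Cplus (m1 k j) (m2 k j)) (B1 + B2).
Proof.
  intros H1 H2 k j. eapply Rle_trans. apply Cmod_triangle.
  specialize (H1 k j). specialize (H2 k j). lra.
Qed.

Lemma bmat_bounded_scal c m B :
  bmat_bounded m B -> bmat_bounded (fun k j => Cmult c (m k j)) (Cmod c * B).
Proof. intros H k j. rewrite Cmod_mult. apply Rmult_le_compat_l. apply Cmod_ge_0. auto. Qed.

Definition bmat_mul (mT mU : bmat) (k j : nat) : C :=
  Cplus (Cmult (mU k (2 * (j / 2))%nat) (mT (2 * (j / 2))%nat j))
        (Cmult (mU k (2 * (j / 2) + 1)%nat) (mT (2 * (j / 2) + 1)%nat j)).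

Lemma bmat_bounded_mul mT mU B1 B2 : bmat_bounded mT B1 -> bmat_bounded mU B2 ->
  bmat_bounded (bmat_mul mT mU) (2 * B1 * B2).
Proof.
  intros H1 H2 k j. unfold bmat_mul. eapply Rle_trans. apply Cmod_triangle. rewrite !Cmod_mult.
  set (q := (2 * (j / 2) + 1)%nat). set (p := (2 * (j / 2))%nat).
  pose proof (Cmod_ge_0 (mU k p)). pose proof (Cmod_ge_0 (mU k q)).
  pose proof (Cmod_ge_0 (mT p j)). pose proof (Cmod_ge_0 (mT q j)).
  pose proof (H1 p j). pose proof (H1 q j). pose proof (H2 k p). pose proof (H2 k q).
  pose proof (bmat_bounded_nonneg _ _ H1). pose proof (bmat_bounded_nonneg _ _ H2).
  nra.
Qed.

Lemma opadd_block_op m1 m2 : opadd (block_op m1) (block_op m2)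
  = block_op (fun k j => Cplus (m1 k j) (m2 k j)).
Proof.
  apply functional_extensionality; intros x. unfold opadd, block_op.
  destruct (excluded_middle_informative (l2 x)).
  - apply vec_ext; intros j. unfold vadd, block_apply. ring.
  - apply vec_ext; intros j. unfold vadd, vzero. ring.
Qed.

Lemma opscal_block_op c m : opscal c (block_op m) = block_op (fun k j => Cmult c (m k j)).
Proof.
  apply functional_extensionality; intros x. unfold opscal, block_op.
  destruct (excluded_middle_informative (l2 x)).
  - apply vec_ext; intros j. unfold vscal, block_apply. ring.
  - apply vec_ext; intros j. unfold vscal, vzero. ring.
Qed.

Lemma block_op_not_l2 m x : ~ l2 x -> block_op m x = vzero.
Proof. intros Hx. unfold block_op. destruct (excluded_middle_informative (l2 x)); tauto. Qed.

Lemma block_op_vzero m : block_op m vzero = vzero.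
Proof.
  rewrite block_op_l2 by apply l2_vzero. apply vec_ext; intros j. unfold block_apply, vzero. ring.
Qed.

Lemma opcomp_block_op mT mU B : bmat_bounded mU B ->
  opcomp (block_op mT) (block_op mU) = block_op (bmat_mul mT mU).
Proof.
  intros HB. apply functional_extensionality; intros x. unfold opcomp.
  destruct (excluded_middle_informative (l2 x)) as [Hx|Hx].
  - rewrite (block_op_l2 mU) by auto.
    rewrite (block_op_l2 mT) by (apply (block_apply_bound mU B); auto).
    rewrite block_op_l2 by auto. apply vec_ext; intros j. unfold block_apply, bmat_mul.
    rewrite double_div2, double_succ_div2. ring.
  - rewrite (block_op_not_l2 mU x Hx), (block_op_not_l2 _ x Hx). apply block_op_vzero.
Qed.

Definition indicator (X : nat -> Prop) (n : nat) : C :=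
  if excluded_middle_informative (X n) then RtoC 1 else RtoC 0.

Lemma indicator_in X n : X n -> indicator X n = RtoC 1.
Proof. intros H. unfold indicator. destruct (excluded_middle_informative (X n)); tauto. Qed.

Lemma indicator_notin X n : ~ X n -> indicator X n = RtoC 0.
Proof. intros H. unfold indicator. destruct (excluded_middle_informative (X n)); tauto. Qed.

Lemma indicator_bound X n : Cmod (indicator X n) <= 1.
Proof.
  unfold indicator. destruct (excluded_middle_informative (X n)); rewrite ?Cmod_1, ?Cmod_0; lra.
Qed.

Definition proj_bmat (X : nat -> Prop) (k j : nat) : C :=
  if (k =? j)%nat then indicator X (j / 2) else RtoC 0.

Lemma PA_block_op X : PA X = block_op (proj_bmat X).
Proof.
  apply functional_extensionality; intros x. unfold PA, block_op.
  destruct (excluded_middle_informative (l2 x)) as [Hx|Hx]; auto.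
  apply vec_ext; intros j. unfold block_apply, proj_bmat, indicator.
  pose proof (div2_cases j).
  destruct (Nat.eqb_spec (2 * (j / 2))%nat j) as [E1|E1],
    (Nat.eqb_spec (2 * (j / 2) + 1)%nat j) as [E2|E2]; try lia.
  - rewrite E1. destruct (excluded_middle_informative (X (j / 2)%nat)); ring.
  - rewrite E2. destruct (excluded_middle_informative (X (j / 2)%nat)); ring.
Qed.

Lemma proj_bmat_bounded X : bmat_bounded (proj_bmat X) 1.
Proof.
  intros k j. unfold proj_bmat. destruct (Nat.eqb k j). apply indicator_bound.
  rewrite Cmod_0; lra.
Qed.

Lemma A0_opadd T U : A0 T -> A0 U -> A0 (opadd T U).
Proof.
  intros HT HU.
  destruct (A0_entry_bounded T HT) as [B1 H1]. destruct (A0_entry_bounded U HU) as [B2 H2].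
  rewrite (A0_block_op_entry T HT), (A0_block_op_entry U HU), opadd_block_op.
  apply (block_op_A0 _ _ (bmat_bounded_add _ _ _ _ H1 H2)).
Qed.

Lemma A0_opscal c T : A0 T -> A0 (opscal c T).
Proof.
  intros HT. destruct (A0_entry_bounded T HT) as [B1 H1].
  rewrite (A0_block_op_entry T HT), opscal_block_op.
  apply (block_op_A0 _ _ (bmat_bounded_scal c _ _ H1)).
Qed.

Lemma A0_opcomp T U : A0 T -> A0 U -> A0 (opcomp T U) /\
  forall k j, (k / 2 = j / 2)%nat -> entry (opcomp T U) k j = bmat_mul (entry T) (entry U) k j.
Proof.
  intros HT HU.
  destruct (A0_entry_bounded T HT) as [B1 H1]. destruct (A0_entry_bounded U HU) as [B2 H2].
  rewrite (A0_block_op_entry T HT), (A0_block_op_entry U HU), (opcomp_block_op _ _ _ H2). split.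
  - apply (block_op_A0 _ _ (bmat_bounded_mul _ _ _ _ H1 H2)).
  - intros k j E. rewrite entry_block_op, (proj2 (Nat.eqb_eq _ _) E).
    unfold bmat_mul. rewrite !entry_block_op, !double_div2, !double_succ_div2.
    rewrite ?(proj2 (Nat.eqb_eq (k / 2) (j / 2)) E), ?Nat.eqb_refl. reflexivity.
Qed.

(** * Compactness *)

Lemma A0_entry_le_image_dist T k1 k2 j : A0 T -> (k2 / 2 <> j / 2)%nat ->
  Cmod (entry T k1 j) <= norm2 (vadd (T (e k1)) (vscal (RtoC (-1)) (T (e k2)))).
Proof.
  intros HA Hk2. pose proof (proj1 HA) as HT.
  eapply Rle_trans; [|apply Cmod_coord_le_norm2 with (j := j)].
  - unfold vadd, vscal. fold (entry T k1 j) (entry T k2 j).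
    rewrite (A0_entry_off_block T HA k2 j Hk2). right. f_equal. ring.
  - apply l2_vadd. apply HT, l2_e. apply l2_vscal, HT, l2_e.
Qed.

(* Rows with an entry above [eps] lying in pairwise different blocks give basis
   vectors whose images stay [eps]-apart, so no subsequence is Cauchy. *)
Lemma compact_A0_entry_vanish (T : op) : A0 T -> compact_op T ->
  forall eps, 0 < eps -> exists N, forall k j, (N <= k)%nat -> Cmod (entry T k j) <= eps.
Proof.
  intros HA [HB Hc] eps Heps. apply NNPP; intros Hno.
  assert (Hg : forall N,
    exists kj : nat * nat, (N <= fst kj)%nat /\ eps < Cmod (entry T (fst kj) (snd kj))).
  { intros N. apply NNPP; intros H. apply Hno. exists N. intros k j Hk.
    apply Rnot_lt_le. intros Hlt. apply H. exists (k, j). simpl. auto. }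
  set (g := fun N => proj1_sig (constructive_indefinite_description _ (Hg N))).
  assert (Hgp : forall N, (N <= fst (g N))%nat /\ eps < Cmod (entry T (fst (g N)) (snd (g N)))).
  { intros N. unfold g. destruct (constructive_indefinite_description _ (Hg N)); auto. }
  set (ks := fix ks (i : nat) : nat * nat :=
    match i with O => g 0%nat | S i => g (fst (ks i) + 2)%nat end).
  assert (Hks : forall i i', (i < i')%nat -> (fst (ks i) + 2 <= fst (ks i'))%nat).
  { intros i i' Hii. induction Hii.
    - simpl. apply Hgp.
    - simpl. pose proof (proj1 (Hgp (fst (ks m) + 2)%nat)). lia. }
  assert (Hkb : forall i, eps < Cmod (entry T (fst (ks i)) (snd (ks i))))
    by (intros [|i]; apply Hgp).
  destruct (Hc (fun i => e (fst (ks i)))) as (phi & Hphi & HC).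
  { intros i. split. apply l2_e. rewrite norm2_e. lra. }
  destruct (HC (eps / 2) ltac:(lra)) as [N0 HN0].
  specialize (HN0 N0 (S N0) ltac:(lia) ltac:(lia)).
  set (k1 := fst (ks (phi N0))). set (j1 := snd (ks (phi N0))). set (k2 := fst (ks (phi (S N0)))).
  assert (H12 : (k1 + 2 <= k2)%nat) by (apply Hks, Hphi).
  assert (Hbig : eps < Cmod (entry T k1 j1)) by apply Hkb.
  assert (Hblk : (k1 / 2)%nat = (j1 / 2)%nat).
  { destruct (Nat.eq_dec (k1 / 2) (j1 / 2)); auto.
    rewrite (A0_entry_off_block T HA k1 j1 n), Cmod_0 in Hbig. lra. }
  assert (Hsep : (k2 / 2 <> j1 / 2)%nat).
  { pose proof (div2_cases k1). pose proof (div2_cases k2). lia. }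
  pose proof (A0_entry_le_image_dist T k1 k2 j1 HA Hsep).
  change (norm2 (vadd (T (e k1)) (vscal (RtoC (-1)) (T (e k2)))) <= eps / 2) in HN0. lra.
Qed.

Definition strictly_increasing (th : nat -> nat) : Prop := forall n, (th n < th (S n))%nat.

Lemma strictly_increasing_lt th :
  strictly_increasing th -> forall a b, (a < b)%nat -> (th a < th b)%nat.
Proof. intros H a b Hab. induction Hab. apply H. specialize (H m). lia. Qed.

Lemma strictly_increasing_ge th : strictly_increasing th -> forall n, (n <= th n)%nat.
Proof. intros H n. induction n. lia. specialize (H n). lia. Qed.

Definition Cauchy_R (s : nat -> R) : Prop :=
  forall eta, 0 < eta -> exists I, forall a b, (I <= a)%nat -> (I <= b)%nat ->
    Rabs (s a - s b) <= eta.

Definition Cauchy_C (s : nat -> C) : Prop :=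
  forall eta, 0 < eta -> exists I, forall a b, (I <= a)%nat -> (I <= b)%nat ->
    Cmod (Cplus (s a) (Cmult (RtoC (-1)) (s b))) <= eta.

Lemma Cauchy_R_subseq s th : Cauchy_R s -> strictly_increasing th -> Cauchy_R (fun n => s (th n)).
Proof.
  intros H Hth eta Heta. destruct (H eta Heta) as [I HI]. exists I. intros a b Ha Hb.
  pose proof (strictly_increasing_ge th Hth a). pose proof (strictly_increasing_ge th Hth b).
  apply HI; lia.
Qed.

Lemma Cauchy_subseq_R (r : nat -> R) (B : R) : (forall i, Rabs (r i) <= B) ->
  exists th, strictly_increasing th /\ Cauchy_R (fun n => r (th n)).
Proof.
  intros Hr.
  destruct (Bolzano_Weierstrass r (fun c => -B <= c <= B) (compact_P3 (-B) B)) as [l Hl].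
  { intros i. specialize (Hr i). apply Rabs_le_between in Hr. auto. }
  assert (Hex : forall N i : nat, exists p, (N <= p)%nat /\ Rabs (r p - l) < / (INR i + 1)).
  { intros N i.
    assert (Hpos : 0 < / (INR i + 1)) by (apply Rinv_0_lt_compat; pose proof (pos_INR i); lra).
    destruct (Hl (fun c => Rabs (c - l) < / (INR i + 1)) N) as [p [Hp1 Hp2]].
    - exists (mkposreal _ Hpos). intros y Hy. exact Hy.
    - exists p; auto. }
  set (ch := fun N i => proj1_sig (constructive_indefinite_description _ (Hex N i))).
  assert (Hch : forall N i, (N <= ch N i)%nat /\ Rabs (r (ch N i) - l) < / (INR i + 1)).
  { intros N i. unfold ch. destruct (constructive_indefinite_description _ (Hex N i)); auto. }
  set (th := fix th (i : nat) : nat :=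
    match i with O => ch 0%nat 0%nat | S i => ch (S (th i)) (S i) end).
  exists th. split.
  - intros n. simpl. pose proof (proj1 (Hch (S (th n)) (S n))). lia.
  - assert (Hc : forall i, Rabs (r (th i) - l) < / (INR i + 1)) by (intros [|i]; apply Hch).
    intros eta Heta. destruct (archimed_cor1 (eta / 2) ltac:(lra)) as [I [HI1 HI2]].
    exists I. intros a b Ha Hb.
    assert (Ea : / (INR a + 1) <= / INR I).
    { apply Rinv_le_contravar. apply lt_0_INR; lia. apply le_INR in Ha. lra. }
    assert (Eb : / (INR b + 1) <= / INR I).
    { apply Rinv_le_contravar. apply lt_0_INR; lia. apply le_INR in Hb. lra. }
    pose proof (Hc a). pose proof (Hc b).
    apply Rabs_def2 in H. apply Rabs_def2 in H0. apply Rabs_le. split; lra.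
Qed.

Lemma Cauchy_subseq_C (s : nat -> C) (B : R) : (forall i, Cmod (s i) <= B) ->
  exists th, strictly_increasing th /\ Cauchy_C (fun n => s (th n)).
Proof.
  intros Hs.
  destruct (Cauchy_subseq_R (fun i => fst (s i)) B) as [th1 [Hth1 H1]].
  { intros i. eapply Rle_trans. apply re_le_Cmod. apply Hs. }
  destruct (Cauchy_subseq_R (fun i => snd (s (th1 i))) B) as [th2 [Hth2 H2]].
  { intros i. eapply Rle_trans. apply im_le_Cmod. apply Hs. }
  exists (fun n => th1 (th2 n)). split.
  - intros n. apply strictly_increasing_lt; auto.
  - intros eta Heta. pose proof (Cauchy_R_subseq _ _ H1 Hth2) as H1'.
    destruct (H1' (eta / 2) ltac:(lra)) as [I1 HI1]. destruct (H2 (eta / 2) ltac:(lra)) as [I2 HI2].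
    exists (I1 + I2)%nat. intros a b Ha Hb. eapply Rle_trans. apply Cmod_le_Rabs_re_im.
    specialize (HI1 a b ltac:(lia) ltac:(lia)). specialize (HI2 a b ltac:(lia) ltac:(lia)).
    simpl in *. set (sa := s (th1 (th2 a))) in *. set (sb := s (th1 (th2 b))) in *.
    replace (fst sa + (-1 * fst sb - 0 * snd sb)) with (fst sa - fst sb) by ring.
    replace (snd sa + (-1 * snd sb + 0 * fst sb)) with (snd sa - snd sb) by ring. lra.
Qed.

(* Diagonal argument: [psi (S k)] is a subsequence of [psi k] along which coordinate
   [k] is Cauchy, and [fun n => psi (S n) n] is eventually a subsequence of each. *)
Lemma Cauchy_subseq_coordinatewise (u : nat -> vec) (B : R) : (forall i k, Cmod (u i k) <= B) ->
  exists phi, strictly_increasing phi /\ forall k, Cauchy_C (fun n => u (phi n) k).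
Proof.
  intros Hu.
  assert (Hex : forall (ps : nat -> nat) (k : nat),
    exists th, strictly_increasing th /\ Cauchy_C (fun n => u (ps (th n)) k)).
  { intros ps k. apply (Cauchy_subseq_C (fun i => u (ps i) k) B). intros; apply Hu. }
  set (ext := fun ps k => proj1_sig (constructive_indefinite_description _ (Hex ps k))).
  assert (Hext : forall ps k,
    strictly_increasing (ext ps k) /\ Cauchy_C (fun n => u (ps (ext ps k n)) k)).
  { intros ps k. unfold ext. destruct (constructive_indefinite_description _ (Hex ps k)); auto. }
  set (psi := fix psi (j : nat) : nat -> nat :=
    match j with O => fun n => n | S j => fun n => psi j (ext (psi j) j n) end).
  assert (Hpsi : forall j, strictly_increasing (psi j)).
  { induction j; simpl. intros n; lia. intros n. apply strictly_increasing_lt; auto. apply Hext. }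
  assert (Hrho : forall k j, (S k <= j)%nat ->
    forall n, exists r, (n <= r)%nat /\ psi j n = psi (S k) r).
  { intros k j Hj. induction Hj; intros n.
    - exists n. split; auto.
    - simpl. destruct (IHHj (ext (psi m) m n)) as [r [Hr1 Hr2]]. exists r. split; auto.
      pose proof (strictly_increasing_ge _ (proj1 (Hext (psi m) m)) n). lia. }
  exists (fun n => psi (S n) n). split.
  - intros n. change (psi (S n) n < psi (S n) (ext (psi (S n)) (S n) (S n)))%nat.
    apply (strictly_increasing_lt _ (Hpsi (S n))).
    pose proof (strictly_increasing_ge _ (proj1 (Hext (psi (S n)) (S n))) (S n)). lia.
  - intros k eta Heta.
    destruct (proj2 (Hext (psi k) k) eta Heta) as [I HI].
    exists (I + S k)%nat. intros a b Ha Hb.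
    destruct (Hrho k (S a) ltac:(lia) a) as [ra [Hra1 Hra2]].
    destruct (Hrho k (S b) ltac:(lia) b) as [rb [Hrb1 Hrb2]].
    cbv beta. rewrite Hra2, Hrb2. simpl. apply HI; lia.
Qed.

Lemma Cauchy_uniform_finite (s : nat -> vec) : (forall k, Cauchy_C (fun n => s n k)) ->
  forall M eta, 0 < eta -> exists I, forall a b, (I <= a)%nat -> (I <= b)%nat ->
    forall k, (k < M)%nat -> Cmod (Cplus (s a k) (Cmult (RtoC (-1)) (s b k))) <= eta.
Proof.
  intros H M eta Heta. induction M.
  - exists 0%nat. intros; lia.
  - destruct IHM as [I1 HI1]. destruct (H M eta Heta) as [I2 HI2]. exists (I1 + I2)%nat.
    intros a b Ha Hb k Hk. destruct (Nat.eq_dec k M). subst. apply HI2; lia. apply HI1; lia.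
Qed.


Lemma block_apply_split_bound m B e1 eta N w : bmat_bounded m B -> 0 <= e1 ->
  (forall k j, (N <= k)%nat -> Cmod (m k j) <= e1) -> l2 w ->
  (forall k, (k < 2 * N)%nat -> Cmod (w k) <= eta) ->
  Series (fun k => Cmod (block_apply m w k) ^ 2)
    <= INR (2 * N) * (4 * B ^ 2 * eta ^ 2) + 4 * e1 ^ 2 * Series (fun k => Cmod (w k) ^ 2).
Proof.
  intros HB He1 HN Hw Hwk.
  destruct (l2_pairwise_dominated w (block_apply m w)
     (fun j => if (j <? 2 * N)%nat then 4 * B ^ 2 * eta ^ 2 else 0)
     (INR (2 * N) * (4 * B ^ 2 * eta ^ 2)) (2 * e1 ^ 2) Hw) as [_ Hser].
  - nra.
  - intros k. destruct (k <? 2 * N)%nat; [|lra].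
    pose proof (pow2_ge_0 B). pose proof (pow2_ge_0 eta). nra.
  - apply is_series_indicator_lt.
  - intros j. unfold pair_sums. pose proof (Cmod_sq_nonneg (w (2 * (j / 2))%nat)).
    pose proof (Cmod_sq_nonneg (w (2 * (j / 2) + 1)%nat)).
    destruct (Nat.ltb_spec j (2 * N)).
    + eapply Rle_trans. apply (Cmod_lin2_sq _ _ _ _ B); apply HB.
      assert (Cmod (w (2 * (j / 2))%nat) ^ 2 <= eta ^ 2).
      { apply pow_incr. split. apply Cmod_ge_0. apply Hwk. pose proof (div2_cases j). lia. }
      assert (Cmod (w (2 * (j / 2) + 1)%nat) ^ 2 <= eta ^ 2).
      { apply pow_incr. split. apply Cmod_ge_0. apply Hwk. pose proof (div2_cases j). lia. }
      pose proof (pow2_ge_0 B). pose proof (pow2_ge_0 e1). nra.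
    + rewrite Rplus_0_l. apply Cmod_lin2_sq; apply HN; pose proof (div2_cases j); lia.
  - lra.
Qed.

Lemma small_head_weight N B eps : 0 <= B -> 0 < eps ->
  let eta := eps / (4 * (INR N + 1) * (B + 1)) in
  0 < eta /\ INR (2 * N) * (4 * B ^ 2 * eta ^ 2) <= eps ^ 2 / 2.
Proof.
  intros HB Heps eta. pose proof (pos_INR N) as HN0. set (n := INR N) in *.
  assert (Hd : 0 < 4 * (n + 1) * (B + 1)) by (apply Rmult_lt_0_compat; lra).
  split. apply Rdiv_lt_0_compat; lra.
  rewrite mult_INR. simpl INR. fold n. unfold eta.
  replace ((1 + 1) * n * (4 * B ^ 2 * (eps / (4 * (n + 1) * (B + 1))) ^ 2))
    with (eps ^ 2 * ((n * B ^ 2) / (2 * (n + 1) ^ 2 * (B + 1) ^ 2))) by (field; lra).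
  assert (n * B ^ 2 / (2 * (n + 1) ^ 2 * (B + 1) ^ 2) <= 1 / 2).
  { apply Rmult_le_reg_r with (2 * (n + 1) ^ 2 * (B + 1) ^ 2). nra.
    unfold Rdiv. rewrite Rmult_assoc, Rinv_l by nra.
    assert (n * B ^ 2 <= (n + 1) ^ 2 * (B + 1) ^ 2) by (apply Rmult_le_compat; nra). nra. }
  pose proof (pow2_ge_0 eps). nra.
Qed.

(* The coordinatewise Cauchy subsequence controls the finitely many rows with
   large entries; the remaining rows have small entries. *)
Lemma block_op_compact m B : bmat_bounded m B ->
  (forall eps, 0 < eps -> exists N, forall k j, (N <= k)%nat -> Cmod (m k j) <= eps) ->
  compact_op (block_op m).
Proof.
  intros HB Hsm. split. apply (block_op_bounded m B HB).
  intros u Hu. pose proof (bmat_bounded_nonneg m B HB) as HB0.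
  destruct (Cauchy_subseq_coordinatewise u 1) as [phi [Hphi Hcau]].
  { intros i k. destruct (Hu i). eapply Rle_trans. apply Cmod_coord_le_norm2; auto. auto. }
  exists phi. split. apply Hphi. intros eps Heps.
  destruct (Hsm (eps / 6) ltac:(lra)) as [N HN].
  destruct (small_head_weight N B eps HB0 Heps) as [Heta Hhead].
  set (eta := eps / (4 * _ * _)) in *.
  destruct (Cauchy_uniform_finite (fun n => u (phi n)) Hcau (2 * N)%nat eta Heta) as [I HI].
  exists I. intros a b Ha Hb.
  destruct (Hu (phi a)) as [Hla Hna]. destruct (Hu (phi b)) as [Hlb Hnb].
  set (w := vsub (u (phi a)) (u (phi b))).
  assert (Hw : l2 w) by (apply l2_vadd; auto; apply l2_vscal; auto).
  rewrite (block_op_l2 m _ Hla), (block_op_l2 m _ Hlb), <- block_apply_linear. fold w.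
  assert (Hsw : Series (fun k => Cmod (w k) ^ 2) <= 4).
  { eapply Rle_trans. apply Series_sq_vsub_le; auto.
    pose proof (Series_sq_le_1 _ Hla Hna). pose proof (Series_sq_le_1 _ Hlb Hnb). lra. }
  pose proof (Series_nonneg _ Hw (fun k => Cmod_sq_nonneg (w k))).
  pose proof (block_apply_split_bound m B (eps / 6) eta N w HB ltac:(lra) HN Hw
    (fun k Hk => HI a b Ha Hb k Hk)) as Hser.
  unfold norm2. rewrite <- (sqrt_pow2 eps) by lra. apply sqrt_le_1_alt.
  eapply Rle_trans. apply Hser.
  assert (4 * (eps / 6) ^ 2 * Series (fun k => Cmod (w k) ^ 2) <= eps ^ 2 / 2).
  { apply Rle_trans with (4 * (eps / 6) ^ 2 * 4). apply Rmult_le_compat_l; auto. nra. nra. }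
  lra.
Qed.

(** * Coefficients in the bases f_alpha *)

Definition beta (alpha : R) : R := sqrt (1 - alpha ^ 2).

Definition block_form (m : bmat) (n : nat) (u0 u1 v0 v1 : C) : C :=
  Cplus (Cplus (Cmult (Cmult u0 v0) (m (2 * n)%nat (2 * n)%nat))
               (Cmult (Cmult u0 v1) (m (2 * n)%nat (2 * n + 1)%nat)))
        (Cplus (Cmult (Cmult u1 v0) (m (2 * n + 1)%nat (2 * n)%nat))
               (Cmult (Cmult u1 v1) (m (2 * n + 1)%nat (2 * n + 1)%nat))).

Definition coef_ee m alpha n :=
  block_form m n (RtoC alpha) (RtoC (beta alpha)) (RtoC alpha) (RtoC (beta alpha)).
Definition coef_eo m alpha n :=
  block_form m n (RtoC alpha) (RtoC (beta alpha)) (RtoC (beta alpha)) (RtoC (- alpha)).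
Definition coef_oe m alpha n :=
  block_form m n (RtoC (beta alpha)) (RtoC (- alpha)) (RtoC alpha) (RtoC (beta alpha)).
Definition coef_oo m alpha n :=
  block_form m n (RtoC (beta alpha)) (RtoC (- alpha)) (RtoC (beta alpha)) (RtoC (- alpha)).

Lemma f_even_e alpha n :
  f_even alpha n =
  vadd (vscal (RtoC alpha) (e (2 * n))) (vscal (RtoC (beta alpha)) (e (2 * n + 1))).
Proof.
  apply vec_ext; intros j. unfold f_even, vadd, vscal, e, beta.
  destruct (Nat.eqb_spec j (2 * n)), (Nat.eqb_spec j (2 * n + 1)); try lia; ring.
Qed.

Lemma f_odd_e alpha n :
  f_odd alpha n =
  vadd (vscal (RtoC (beta alpha)) (e (2 * n))) (vscal (RtoC (- alpha)) (e (2 * n + 1))).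
Proof.
  apply vec_ext; intros j. unfold f_odd, vadd, vscal, e, beta.
  destruct (Nat.eqb_spec j (2 * n)), (Nat.eqb_spec j (2 * n + 1)); try lia; ring.
Qed.

Lemma inner_op_block_vec (T : op) (HT : bounded_op T) n (u0 u1 : C) (v : vec) (v0 v1 : C) :
  (forall k, k <> (2 * n)%nat -> k <> (2 * n + 1)%nat -> v k = RtoC 0) ->
  v (2 * n)%nat = Cconj v0 -> v (2 * n + 1)%nat = Cconj v1 ->
  inner (T (vadd (vscal u0 (e (2 * n))) (vscal u1 (e (2 * n + 1))))) v
    = block_form (entry T) n u0 u1 v0 v1.
Proof.
  intros Hv H0 H1.
  rewrite (bounded_op_vadd T HT (vscal u0 (e (2 * n))) (vscal u1 (e (2 * n + 1))))
    by auto using l2_e, l2_vscal.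
  rewrite (bounded_op_vscal T HT (e (2 * n)) u0), (bounded_op_vscal T HT (e (2 * n + 1)) u1)
    by apply l2_e.
  rewrite (inner_support2 _ _ (2 * n) (2 * n + 1)); [ | lia | ].
  - rewrite H0, H1, !Cconj_conj. unfold vadd, vscal, block_form, entry. ring.
  - intros k Hk1 Hk2. rewrite (Hv k Hk1 Hk2). apply C_ext; simpl; ring.
Qed.

Lemma inner_f_even_f_odd (T : op) (HT : bounded_op T) alpha n :
  inner (T (f_even alpha n)) (f_odd alpha n) = coef_eo (entry T) alpha n.
Proof.
  rewrite f_even_e. apply inner_op_block_vec; auto; unfold f_odd.
  - intros k H1 H2. apply Nat.eqb_neq in H1, H2. rewrite H1, H2. reflexivity.
  - rewrite Nat.eqb_refl, Cconj_RtoC. reflexivity.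
  - rewrite Nat.eqb_refl, double_succ_neq_double, Cconj_RtoC. reflexivity.
Qed.

Lemma inner_f_odd_f_even (T : op) (HT : bounded_op T) alpha n :
  inner (T (f_odd alpha n)) (f_even alpha n) = coef_oe (entry T) alpha n.
Proof.
  rewrite f_odd_e. apply inner_op_block_vec; auto; unfold f_even.
  - intros k H1 H2. apply Nat.eqb_neq in H1, H2. rewrite H1, H2. reflexivity.
  - rewrite Nat.eqb_refl, Cconj_RtoC. reflexivity.
  - rewrite Nat.eqb_refl, double_succ_neq_double, Cconj_RtoC. reflexivity.
Qed.

Lemma block_form_block_op m n u0 u1 v0 v1 :
  block_form (entry (block_op m)) n u0 u1 v0 v1 = block_form m n u0 u1 v0 v1.
Proof.
  unfold block_form. rewrite !entry_block_op, !double_div2, !double_succ_div2, Nat.eqb_refl.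
  reflexivity.
Qed.

Lemma block_form_bound m n u0 u1 v0 v1 eps :
  Cmod u0 <= 1 -> Cmod u1 <= 1 -> Cmod v0 <= 1 -> Cmod v1 <= 1 ->
  (forall a b, Cmod (m (2 * n + a)%nat (2 * n + b)%nat) <= eps) ->
  Cmod (block_form m n u0 u1 v0 v1) <= 4 * eps.
Proof.
  intros H0 H1 H2 H3 Hm. unfold block_form.
  assert (G : forall u v w, Cmod u <= 1 -> Cmod v <= 1 -> Cmod w <= eps ->
    Cmod (Cmult (Cmult u v) w) <= eps).
  { intros u v w Hu Hv Hw. rewrite !Cmod_mult.
    pose proof (Cmod_ge_0 u). pose proof (Cmod_ge_0 v). pose proof (Cmod_ge_0 w).
    apply Rle_trans with (1 * 1 * Cmod w); [|lra].
    apply Rmult_le_compat_r; auto. apply Rmult_le_compat; auto. }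
  pose proof (Hm 0%nat 0%nat) as K1. pose proof (Hm 0%nat 1%nat) as K2.
  pose proof (Hm 1%nat 0%nat) as K3. pose proof (Hm 1%nat 1%nat) as K4.
  rewrite !Nat.add_0_r in K1, K2, K3.
  pose proof (G _ _ _ H0 H2 K1). pose proof (G _ _ _ H0 H3 K2).
  pose proof (G _ _ _ H1 H2 K3). pose proof (G _ _ _ H1 H3 K4).
  repeat (eapply Rle_trans; [apply Cmod_triangle|]).
  eapply Rle_trans. apply Rplus_le_compat; apply Cmod_triangle. lra.
Qed.

Lemma beta_sq alpha : alpha ^ 2 <= 1 -> beta alpha ^ 2 = 1 - alpha ^ 2.
Proof. intros H. unfold beta. rewrite pow2_sqrt; lra. Qed.

Lemma alpha_beta_unit alpha : alpha ^ 2 <= 1 ->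
  Cplus (Cmult (RtoC alpha) (RtoC alpha)) (Cmult (RtoC (beta alpha)) (RtoC (beta alpha))) = RtoC 1.
Proof. intros H. pose proof (beta_sq alpha H). apply C_ext; simpl; nra. Qed.

Lemma f_coords_bound alpha : alpha ^ 2 <= 1 ->
  Cmod (RtoC alpha) <= 1 /\ Cmod (RtoC (beta alpha)) <= 1 /\ Cmod (RtoC (- alpha)) <= 1.
Proof.
  intros H. pose proof (beta_sq alpha H). assert (0 <= beta alpha) by (unfold beta; apply sqrt_pos).
  rewrite !Cmod_R, Rabs_Ropp, (Rabs_pos_eq (beta alpha)) by auto.
  repeat split; try apply Rabs_le; nra.
Qed.

Lemma coef_bounds m n alpha B : alpha ^ 2 <= 1 -> bmat_bounded m B ->
  Cmod (coef_ee m alpha n) <= 4 * B /\ Cmod (coef_oo m alpha n) <= 4 * B /\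
  Cmod (coef_eo m alpha n) <= 4 * B /\ Cmod (coef_oe m alpha n) <= 4 * B.
Proof.
  intros Ha Hm. destruct (f_coords_bound alpha Ha) as (H1 & H2 & H3).
  unfold coef_ee, coef_oo, coef_eo, coef_oe. repeat split; apply block_form_bound; auto.
Qed.

Definition fe_coord alpha k : C := if Nat.even k then RtoC alpha else RtoC (beta alpha).
Definition fo_coord alpha k : C := if Nat.even k then RtoC (beta alpha) else RtoC (- alpha).

Lemma fe_coord_bound alpha k : alpha ^ 2 <= 1 -> Cmod (fe_coord alpha k) <= 1.
Proof.
  intros H. destruct (f_coords_bound alpha H) as (? & ? & ?).
  unfold fe_coord. now destruct (Nat.even k).
Qed.

Lemma fo_coord_bound alpha k : alpha ^ 2 <= 1 -> Cmod (fo_coord alpha k) <= 1.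
Proof.
  intros H. destruct (f_coords_bound alpha H) as (? & ? & ?).
  unfold fo_coord. now destruct (Nat.even k).
Qed.

Lemma bmat_f_expansion (M : bmat) alpha n k j : alpha ^ 2 <= 1 ->
  (k = 2 * n \/ k = 2 * n + 1)%nat -> (j = 2 * n \/ j = 2 * n + 1)%nat ->
  M k j = Cplus (Cplus (Cmult (coef_ee M alpha n) (Cmult (fe_coord alpha k) (fe_coord alpha j)))
                       (Cmult (coef_eo M alpha n) (Cmult (fe_coord alpha k) (fo_coord alpha j))))
                (Cplus (Cmult (coef_oe M alpha n) (Cmult (fo_coord alpha k) (fe_coord alpha j)))
                       (Cmult (coef_oo M alpha n) (Cmult (fo_coord alpha k) (fo_coord alpha j)))).
Proof.
  intros Ha Hk Hj. pose proof (alpha_beta_unit alpha Ha) as Ht.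
  set (ca := RtoC alpha) in *. set (cs := RtoC (beta alpha)) in *.
  unfold coef_ee, coef_oo, coef_eo, coef_oe, block_form, fe_coord, fo_coord.
  rewrite RtoC_Ropp. fold ca cs. set (one := Cplus (Cmult ca ca) (Cmult cs cs)) in *.
  destruct Hk as [-> | ->], Hj as [-> | ->]; rewrite ?even_double, ?even_double_succ;
  match goal with |- ?L = ?R =>
    transitivity (Cmult (Cmult one one) L); [rewrite Ht; ring | unfold one; ring] end.
Qed.

Lemma coef_off_add m1 m2 alpha n :
  coef_eo (fun k j => Cplus (m1 k j) (m2 k j)) alpha n =
    Cplus (coef_eo m1 alpha n) (coef_eo m2 alpha n) /\
  coef_oe (fun k j => Cplus (m1 k j) (m2 k j)) alpha n =
    Cplus (coef_oe m1 alpha n) (coef_oe m2 alpha n).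
Proof. unfold coef_eo, coef_oe, block_form. split; ring. Qed.

Definition offdiag_vanishing (X : nat -> Prop) (alpha : R) (m : bmat) : Prop :=
  forall eps, 0 < eps -> exists N, forall n, (N <= n)%nat -> X n ->
    Cmod (coef_eo m alpha n) <= eps /\ Cmod (coef_oe m alpha n) <= eps.

(** * Membership in M *)

Lemma DKset_offdiag_vanishing X alpha T :
  alpha ^ 2 <= 1 -> DKset X alpha T -> offdiag_vanishing X alpha (entry T).
Proof.
  intros Ha (S & Rk & HS & HRc & HRa & ET) eps Heps.
  destruct (compact_A0_entry_vanish Rk (proj1 HRa) HRc (eps / 4) ltac:(lra)) as [N HN].
  exists N. intros n Hn HX. subst T.
  destruct HS as [HSa HSd]. destruct (HSd n HX) as [D1 D2].
  rewrite inner_f_even_f_odd in D1 by apply HSa. rewrite inner_f_odd_f_even in D2 by apply HSa.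
  destruct (coef_off_add (entry S) (entry Rk) alpha n) as [E1 E2].
  change (entry (opadd S Rk)) with (fun k j => Cplus (entry S k j) (entry Rk k j)).
  rewrite E1, E2, D1, D2, !Cplus_0_l.
  destruct (f_coords_bound alpha Ha) as (H1 & H2 & H3).
  assert (Hm : forall a b, Cmod (entry Rk (2 * n + a)%nat (2 * n + b)%nat) <= eps / 4)
    by (intros; apply HN; lia).
  unfold coef_eo, coef_oe. split; (eapply Rle_trans; [apply block_form_bound; eauto|lra]).
Qed.

Definition f_diagonal_part X alpha (m : bmat) (k j : nat) : C :=
  Cmult (indicator X (j / 2)%nat)
    (Cplus (Cmult (coef_ee m alpha (j / 2)%nat) (Cmult (fe_coord alpha k) (fe_coord alpha j)))
           (Cmult (coef_oo m alpha (j / 2)%nat) (Cmult (fo_coord alpha k) (fo_coord alpha j)))).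

Lemma f_diagonal_part_bounded X alpha m B : alpha ^ 2 <= 1 -> bmat_bounded m B ->
  bmat_bounded (f_diagonal_part X alpha m) (8 * B).
Proof.
  intros Ha HB k j. unfold f_diagonal_part. rewrite Cmod_mult.
  apply Rle_trans with (1 * (4 * B + 4 * B)); [|lra].
  apply Rmult_le_compat. apply Cmod_ge_0. apply Cmod_ge_0. apply indicator_bound.
  eapply Rle_trans. apply Cmod_triangle.
  destruct (coef_bounds m (j / 2)%nat alpha B Ha HB) as (H1 & H2 & _).
  apply Rplus_le_compat; apply Cmod_mult3_le; auto using fe_coord_bound, fo_coord_bound.
Qed.

Lemma coef_off_f_diagonal_part X alpha m n : X n ->
  coef_eo (f_diagonal_part X alpha m) alpha n = RtoC 0 /\
  coef_oe (f_diagonal_part X alpha m) alpha n = RtoC 0.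
Proof.
  intros HX. unfold coef_eo, coef_oe, block_form, f_diagonal_part, fe_coord, fo_coord.
  rewrite !double_div2, !double_succ_div2, !even_double, !even_double_succ,
    (indicator_in X n HX), !RtoC_Ropp.
  split; ring.
Qed.

Lemma f_diagonal_part_notin X alpha m n k j :
  ~ X n -> (j / 2)%nat = n -> f_diagonal_part X alpha m k j = RtoC 0.
Proof. intros Hn Hj. unfold f_diagonal_part. rewrite Hj, (indicator_notin X n Hn). ring. Qed.

Definition f_offdiag_part X alpha (m : bmat) : bmat := fun k j =>
  if (k / 2 =? j / 2)%nat
  then Cplus (m k j) (Cmult (RtoC (-1)) (f_diagonal_part X alpha m k j))
  else RtoC 0.

Lemma f_offdiag_part_bounded X alpha m B : alpha ^ 2 <= 1 -> bmat_bounded m B ->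
  bmat_bounded (f_offdiag_part X alpha m) (B + 8 * B).
Proof.
  intros Ha HB k j. pose proof (bmat_bounded_nonneg m B HB). unfold f_offdiag_part.
  destruct (k / 2 =? j / 2)%nat; [|rewrite Cmod_0; lra].
  eapply Rle_trans. apply Cmod_triangle. rewrite Cmod_mult, Cmod_R, Rabs_m1, Rmult_1_l.
  apply Rplus_le_compat; auto. apply f_diagonal_part_bounded; auto.
Qed.

Lemma f_offdiag_part_vanish X alpha T : alpha ^ 2 <= 1 -> A0_on X T ->
  offdiag_vanishing X alpha (entry T) ->
  forall eps, 0 < eps ->
  exists N, forall k j, (N <= k)%nat -> Cmod (f_offdiag_part X alpha (entry T) k j) <= eps.
Proof.
  intros Ha [_ HZ] Hsm eps Heps.
  destruct (Hsm (eps / 2) ltac:(lra)) as [N0 HN0]. exists (2 * N0 + 2)%nat. intros k j Hk.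
  unfold f_offdiag_part. destruct (Nat.eqb_spec (k / 2) (j / 2)) as [E|E]; [|rewrite Cmod_0; lra].
  set (n := (j / 2)%nat) in *.
  assert (Hn : (N0 <= n)%nat) by (pose proof (div2_cases k); lia).
  destruct (classic (X n)) as [HX|HX].
  - destruct (HN0 n Hn HX) as [K1 K2].
    destruct (same_block_cases k j E) as [Hk' Hj']. fold n in Hk', Hj'.
    rewrite (bmat_f_expansion (entry T) alpha n k j Ha Hk' Hj').
    unfold f_diagonal_part. fold n. rewrite (indicator_in X n HX).
    set (t1 := Cmult (coef_eo (entry T) alpha n) (Cmult (fe_coord alpha k) (fo_coord alpha j))).
    set (t2 := Cmult (coef_oe (entry T) alpha n) (Cmult (fo_coord alpha k) (fe_coord alpha j))).
    assert (Cmod t1 <= eps / 2) by (apply Cmod_mult3_le; auto using fe_coord_bound, fo_coord_bound).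
    assert (Cmod t2 <= eps / 2) by (apply Cmod_mult3_le; auto using fe_coord_bound, fo_coord_bound).
    match goal with |- Cmod ?z <= _ => replace z with (Cplus t1 t2) by (unfold t1, t2; ring) end.
    eapply Rle_trans. apply Cmod_triangle. lra.
  - rewrite (f_diagonal_part_notin X alpha _ n k j HX eq_refl).
    rewrite (proj1 (block_zero_entry T n) (HZ n HX) k j) by auto.
    replace (Cplus (RtoC 0) (Cmult (RtoC (-1)) (RtoC 0))) with (RtoC 0) by ring.
    rewrite Cmod_0. lra.
Qed.

Lemma f_diagonal_part_Dset X alpha m B : alpha ^ 2 <= 1 -> bmat_bounded m B ->
  Dset X alpha (block_op (f_diagonal_part X alpha m)).
Proof.
  intros Ha HB. pose proof (f_diagonal_part_bounded X alpha m B Ha HB) as Hsb.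
  split. split. apply (block_op_A0 _ _ Hsb).
  - intros n Hn. apply block_zero_entry. intros k j Hk Hj. rewrite entry_block_op.
    rewrite Hk, Hj, Nat.eqb_refl. apply (f_diagonal_part_notin X alpha m n); auto.
  - intros n HX. rewrite inner_f_even_f_odd, inner_f_odd_f_even by apply (block_op_bounded _ _ Hsb).
    unfold coef_eo, coef_oe. rewrite !block_form_block_op. apply coef_off_f_diagonal_part; auto.
Qed.

(* The remainder after removing the diagonal part in the basis [f_alpha] has
   entries tending to 0, hence is compact. *)
Lemma offdiag_vanishing_DKset X alpha T : alpha ^ 2 <= 1 -> A0_on X T ->
  offdiag_vanishing X alpha (entry T) -> DKset X alpha T.
Proof.
  intros Ha HXT Hsm. destruct HXT as [HA HZ].
  destruct (A0_entry_bounded T HA) as [B HB].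
  pose proof (f_offdiag_part_bounded X alpha _ B Ha HB) as Hrb.
  exists (block_op (f_diagonal_part X alpha (entry T))),
    (block_op (f_offdiag_part X alpha (entry T))).
  split; [|split; [|split]].
  - apply (f_diagonal_part_Dset X alpha _ B Ha HB).
  - apply (block_op_compact _ _ Hrb). apply f_offdiag_part_vanish; auto. split; auto.
  - split. apply (block_op_A0 _ _ Hrb).
    intros n Hn. apply block_zero_entry. intros k j Hk Hj. rewrite entry_block_op.
    rewrite Hk, Hj, Nat.eqb_refl. unfold f_offdiag_part. rewrite Hk, Hj, Nat.eqb_refl.
    rewrite (f_diagonal_part_notin X alpha _ n k j Hn Hj).
    rewrite (proj1 (block_zero_entry T n) (HZ n Hn) k j) by auto. ring.
  - rewrite opadd_block_op. rewrite (A0_block_op_entry T HA) at 1. apply block_op_ext. intros k j E.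
    unfold f_offdiag_part. rewrite (proj2 (Nat.eqb_eq _ _) E). ring.
Qed.

Definition compress_bmat X (m : bmat) := bmat_mul (proj_bmat X) (bmat_mul m (proj_bmat X)).

Lemma compress_bmat_entry X m k j : (k / 2 = j / 2)%nat ->
  compress_bmat X m k j = Cmult (indicator X (j / 2)%nat) (Cmult (m k j) (indicator X (j / 2)%nat)).
Proof.
  revert k j. apply same_block_ind; intros n; unfold compress_bmat, bmat_mul, proj_bmat;
  rewrite ?double_div2, ?double_succ_div2, ?Nat.eqb_refl, ?double_succ_neq_double,
    ?double_neq_double_succ; ring.
Qed.

Lemma compress_block_op X T : A0 T ->
  exists B, bmat_bounded (compress_bmat X (entry T)) B /\
  opcomp (PA X) (opcomp T (PA X)) = block_op (compress_bmat X (entry T)).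
Proof.
  intros HA. destruct (A0_entry_bounded T HA) as [B HB].
  pose proof (bmat_bounded_mul _ _ _ _ HB (proj_bmat_bounded X)) as H1.
  pose proof (bmat_bounded_mul _ _ _ _ (proj_bmat_bounded X) H1) as H2.
  eexists. split. exact H2.
  rewrite (A0_block_op_entry T HA) at 1. rewrite PA_block_op.
  rewrite (opcomp_block_op (entry T) (proj_bmat X) 1 (proj_bmat_bounded X)).
  rewrite (opcomp_block_op (proj_bmat X) _ _ H1). reflexivity.
Qed.

Definition asymp_diagonal (XX : (nat -> Prop) -> Prop) (alph : (nat -> Prop) -> R) (T : op) :
  Prop :=
  A0 T /\ forall X, XX X -> offdiag_vanishing X (alph X) (entry T).

Lemma coef_off_compress X alpha m n : X n ->
  coef_eo (entry (block_op (compress_bmat X m))) alpha n = coef_eo m alpha n /\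
  coef_oe (entry (block_op (compress_bmat X m))) alpha n = coef_oe m alpha n.
Proof.
  intros HX. unfold coef_eo, coef_oe. rewrite !block_form_block_op. unfold block_form.
  rewrite !compress_bmat_entry by (rewrite ?double_div2, ?double_succ_div2; reflexivity).
  rewrite !double_div2, !double_succ_div2, (indicator_in X n HX). split; ring.
Qed.

Lemma Mset_iff_asymp_diagonal XX alph T : (forall X, XX X -> alph X ^ 2 <= 1) ->
  (Mset XX alph T <-> asymp_diagonal XX alph T).
Proof.
  intros Halpha. unfold Mset, asymp_diagonal. split; intros [HA H]; split; auto; intros X HX.
  - specialize (H X HX). destruct (compress_block_op X T HA) as (B & HB & E). rewrite E in H.
    apply DKset_offdiag_vanishing in H; auto.
    intros eps Heps. destruct (H eps Heps) as [N HN]. exists N. intros n Hn HXn.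
    destruct (coef_off_compress X (alph X) (entry T) n HXn) as [E1 E2]. rewrite <- E1, <- E2. auto.
  - destruct (compress_block_op X T HA) as (B & HB & E). rewrite E.
    apply offdiag_vanishing_DKset; auto.
    + split. apply (block_op_A0 _ _ HB). intros n Hn. apply block_zero_entry. intros k j Hk Hj.
      rewrite entry_block_op, Hk, Hj, Nat.eqb_refl, compress_bmat_entry by congruence.
      rewrite Hj, (indicator_notin X n Hn). ring.
    + intros eps Heps. destruct (H X HX eps Heps) as [N HN]. exists N. intros n Hn HXn.
      destruct (coef_off_compress X (alph X) (entry T) n HXn) as [E1 E2]. rewrite E1, E2. auto.
Qed.

(** * M is a C*-algebra *)

Lemma block_form_ext m1 m2 n u0 u1 v0 v1 : (forall k j, (k / 2 = j / 2)%nat -> m1 k j = m2 k j) ->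
  block_form m1 n u0 u1 v0 v1 = block_form m2 n u0 u1 v0 v1.
Proof.
  intros H. unfold block_form.
  rewrite !H by (rewrite ?double_div2, ?double_succ_div2; reflexivity). reflexivity.
Qed.

Lemma coef_off_scal c m alpha n :
  coef_eo (fun k j => Cmult c (m k j)) alpha n = Cmult c (coef_eo m alpha n) /\
  coef_oe (fun k j => Cmult c (m k j)) alpha n = Cmult c (coef_oe m alpha n).
Proof. unfold coef_eo, coef_oe, block_form. split; ring. Qed.

Lemma coef_off_mul mT mU alpha n : alpha ^ 2 <= 1 ->
  coef_eo (bmat_mul mT mU) alpha n =
    Cplus (Cmult (coef_ee mU alpha n) (coef_eo mT alpha n))
          (Cmult (coef_eo mU alpha n) (coef_oo mT alpha n)) /\
  coef_oe (bmat_mul mT mU) alpha n =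
    Cplus (Cmult (coef_oe mU alpha n) (coef_ee mT alpha n))
          (Cmult (coef_oo mU alpha n) (coef_oe mT alpha n)).
Proof.
  intros Ha. pose proof (alpha_beta_unit alpha Ha) as Ht.
  set (ca := RtoC alpha) in *. set (cs := RtoC (beta alpha)) in *.
  unfold coef_eo, coef_oe, coef_ee, coef_oo, block_form, bmat_mul.
  rewrite !double_div2, !double_succ_div2, RtoC_Ropp. fold ca cs.
  split; match goal with |- ?L = ?R =>
    transitivity (Cmult (Cplus (Cmult ca ca) (Cmult cs cs)) L); [rewrite Ht; ring | ring] end.
Qed.

Lemma coef_off_adj m alpha n :
  coef_eo (fun k j => Cconj (m j k)) alpha n = Cconj (coef_oe m alpha n) /\
  coef_oe (fun k j => Cconj (m j k)) alpha n = Cconj (coef_eo m alpha n).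
Proof.
  unfold coef_eo, coef_oe, block_form. rewrite !Cplus_conj, !Cmult_conj, !Cconj_RtoC. split; ring.
Qed.

Lemma A0_adjoint T T' : A0 T -> bounded_op T' -> is_adjoint T T' -> A0 T'.
Proof.
  intros HT HT' Had. pose proof (adjoint_entry T T' (proj1 HT) HT' Had) as E.
  split; auto. intros k j H. rewrite inner_e_r in H. change (entry T' k j <> RtoC 0) in H.
  rewrite E in H. destruct (proj2 HT j k) as (n & H1 & H2).
  - rewrite inner_e_r. intros H0. apply H. change (entry T j k = RtoC 0) in H0. rewrite H0.
    apply Cconj_RtoC.
  - exists n; auto.
Qed.

Lemma A0_closed T : bounded_op T ->
  (forall eps, 0 < eps -> exists U, A0 U /\
     forall x, l2 x -> norm2 (vadd (T x) (vscal (RtoC (-1)) (U x))) <= eps * norm2 x) ->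
  A0 T.
Proof.
  intros HT H. split; auto. intros k j Hne. rewrite inner_e_r in Hne.
  change (entry T k j <> RtoC 0) in Hne.
  destruct (Nat.eq_dec (k / 2) (j / 2)) as [E|E].
  - exists (j / 2)%nat. split; apply in_block_iff_div2; auto.
  - exfalso. apply Hne, Cmod_small_eq0. intros eps Heps.
    destruct (H eps Heps) as (U & HU & HTU).
    pose proof (entry_diff_bound T U eps HT (proj1 HU) HTU k j) as G.
    rewrite (A0_entry_off_block U HU k j E) in G.
    replace (Cplus (entry T k j) (Cmult (RtoC (-1)) (RtoC 0))) with (entry T k j) in G by ring.
    exact G.
Qed.

Section AsympDiagonalAlgebra.
Variable XX : (nat -> Prop) -> Prop.
Variable alph : (nat -> Prop) -> R.
Hypothesis Halpha : forall X, XX X -> alph X ^ 2 <= 1.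

Lemma asymp_diagonal_opadd T U : asymp_diagonal XX alph T -> asymp_diagonal XX alph U ->
  asymp_diagonal XX alph (opadd T U).
Proof.
  intros [HT ST] [HU SU]. split. apply A0_opadd; auto.
  intros X HX eps Heps.
  destruct (ST X HX (eps / 2) ltac:(lra)) as [N1 H1].
  destruct (SU X HX (eps / 2) ltac:(lra)) as [N2 H2].
  exists (N1 + N2)%nat. intros n Hn HXn.
  destruct (coef_off_add (entry T) (entry U) (alph X) n) as [E1 E2].
  change (entry (opadd T U)) with (fun k j => Cplus (entry T k j) (entry U k j)). rewrite E1, E2.
  destruct (H1 n ltac:(lia) HXn). destruct (H2 n ltac:(lia) HXn).
  split; (eapply Rle_trans; [apply Cmod_triangle|lra]).
Qed.

Lemma asymp_diagonal_opscal c T : asymp_diagonal XX alph T -> asymp_diagonal XX alph (opscal c T).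
Proof.
  intros [HT ST]. split. apply A0_opscal; auto.
  intros X HX eps Heps. pose proof (Cmod_ge_0 c).
  destruct (ST X HX (eps / (Cmod c + 1))) as [N1 H1]. apply Rdiv_lt_0_compat; lra.
  exists N1. intros n Hn HXn.
  destruct (coef_off_scal c (entry T) (alph X) n) as [E1 E2].
  change (entry (opscal c T)) with (fun k j => Cmult c (entry T k j)). rewrite E1, E2, !Cmod_mult.
  destruct (H1 n Hn HXn) as [K1 K2].
  assert (G : forall z, Cmod z <= eps / (Cmod c + 1) -> Cmod c * Cmod z <= eps).
  { intros z Hz. apply Rle_trans with ((Cmod c + 1) * (eps / (Cmod c + 1))).
    apply Rmult_le_compat; try lra; apply Cmod_ge_0. right; field; lra. }
  split; apply G; auto.
Qed.

Lemma asymp_diagonal_opcomp T U : asymp_diagonal XX alph T -> asymp_diagonal XX alph U ->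
  asymp_diagonal XX alph (opcomp T U).
Proof.
  intros [HT ST] [HU SU]. destruct (A0_opcomp T U HT HU) as [HC EC]. split; auto.
  destruct (A0_entry_bounded T HT) as [B1 HB1]. destruct (A0_entry_bounded U HU) as [B2 HB2].
  pose proof (bmat_bounded_nonneg _ _ HB1). pose proof (bmat_bounded_nonneg _ _ HB2).
  intros X HX eps Heps. set (d := eps / (8 * (B1 + B2 + 1))).
  assert (Hd : 0 < d) by (unfold d; apply Rdiv_lt_0_compat; lra).
  assert (Fin : d * (4 * B1) + 4 * B2 * d <= eps).
  { unfold d. apply Rle_trans with (eps * (4 * (B1 + B2)) / (8 * (B1 + B2 + 1))).
    right; field; lra.
    apply Rmult_le_reg_r with (8 * (B1 + B2 + 1)); [lra|].
    unfold Rdiv. rewrite Rmult_assoc, Rinv_l by lra. nra. }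
  destruct (ST X HX d Hd) as [N1 H1]. destruct (SU X HX d Hd) as [N2 H2].
  exists (N1 + N2)%nat. intros n Hn HXn.
  set (mTU := bmat_mul (entry T) (entry U)).
  assert (E : coef_eo (entry (opcomp T U)) (alph X) n = coef_eo mTU (alph X) n /\
              coef_oe (entry (opcomp T U)) (alph X) n = coef_oe mTU (alph X) n)
    by (split; apply block_form_ext, EC).
  destruct E as [E1 E2]. rewrite E1, E2. unfold mTU.
  destruct (coef_off_mul (entry T) (entry U) (alph X) n (Halpha X HX)) as [F1 F2]. rewrite F1, F2.
  destruct (coef_bounds (entry T) n (alph X) B1 (Halpha X HX) HB1) as (P1 & Q1 & _).
  destruct (coef_bounds (entry U) n (alph X) B2 (Halpha X HX) HB2) as (P2 & Q2 & _).
  destruct (H1 n ltac:(lia) HXn) as [K1 K2]. destruct (H2 n ltac:(lia) HXn) as [K3 K4].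
  assert (Pm : forall a b P Q, Cmod a <= P -> Cmod b <= Q -> Cmod (Cmult a b) <= P * Q).
  { intros a b P Q Ha Hb. rewrite Cmod_mult. pose proof (Cmod_ge_0 a). pose proof (Cmod_ge_0 b).
    apply Rmult_le_compat; auto. }
  split; (eapply Rle_trans; [apply Cmod_triangle|]).
  - pose proof (Pm _ _ _ _ P2 K1). pose proof (Pm _ _ _ _ K3 Q1). lra.
  - pose proof (Pm _ _ _ _ K4 P1). pose proof (Pm _ _ _ _ Q2 K2). lra.
Qed.

Lemma asymp_diagonal_adjoint T T' : asymp_diagonal XX alph T -> bounded_op T' -> is_adjoint T T' ->
  asymp_diagonal XX alph T'.
Proof.
  intros [HT ST] HT' Had. split. apply (A0_adjoint T); auto.
  intros X HX eps Heps. destruct (ST X HX eps Heps) as [N HN]. exists N. intros n Hn HXn.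
  replace (entry T') with (fun k j => Cconj (entry T j k)).
  - destruct (coef_off_adj (entry T) (alph X) n) as [E1 E2]. rewrite E1, E2, !Cmod_conj.
    destruct (HN n Hn HXn). auto.
  - apply functional_extensionality; intros k; apply functional_extensionality; intros j.
    symmetry. apply (adjoint_entry T T' (proj1 HT) HT' Had).
Qed.

Lemma asymp_diagonal_closed T : bounded_op T ->
  (forall eps, 0 < eps -> exists U, asymp_diagonal XX alph U /\
     forall x, l2 x -> norm2 (vadd (T x) (vscal (RtoC (-1)) (U x))) <= eps * norm2 x) ->
  asymp_diagonal XX alph T.
Proof.
  intros HT H. split.
  { apply A0_closed; auto. intros eps Heps. destruct (H eps Heps) as (U & [HU _] & HTU). eauto. }
  intros X HX eps Heps.
  destruct (H (eps / 16) ltac:(lra)) as (U & [HU SU] & HTU).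
  destruct (SU X HX (eps / 2) ltac:(lra)) as [N HN]. exists N. intros n Hn HXn.
  pose proof (entry_diff_bound T U _ HT (proj1 HU) HTU) as G.
  set (dm := fun k j => Cplus (entry T k j) (Cmult (RtoC (-1)) (entry U k j))).
  replace (entry T) with (fun k j => Cplus (entry U k j) (dm k j))
    by (apply functional_extensionality; intros k; apply functional_extensionality; intros j;
        unfold dm; ring).
  destruct (coef_off_add (entry U) dm (alph X) n) as [E1 E2]. rewrite E1, E2.
  destruct (f_coords_bound _ (Halpha X HX)) as (C1 & C2 & C3).
  assert (Hdm : forall a b, Cmod (dm (2 * n + a)%nat (2 * n + b)%nat) <= eps / 16)
    by (intros; apply G).
  assert (D1 : Cmod (coef_eo dm (alph X) n) <= 4 * (eps / 16))
    by (unfold coef_eo; apply block_form_bound; auto).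
  assert (D2 : Cmod (coef_oe dm (alph X) n) <= 4 * (eps / 16))
    by (unfold coef_oe; apply block_form_bound; auto).
  destruct (HN n Hn HXn) as [K1 K2].
  split; (eapply Rle_trans; [apply Cmod_triangle|lra]).
Qed.

Lemma asymp_diagonal_cstar_subalg : cstar_subalg (asymp_diagonal XX alph).
Proof.
  split; [|split; [|split; [|split; [|split]]]].
  - intros T [HA _]. apply HA.
  - apply asymp_diagonal_opadd.
  - apply asymp_diagonal_opscal.
  - apply asymp_diagonal_opcomp.
  - intros T T' H1 H2 H3. apply (asymp_diagonal_adjoint T T'); auto.
  - apply asymp_diagonal_closed.
Qed.

End AsympDiagonalAlgebra.

(** * Block projections and spectral decomposition of Hermitian 2x2 blocks *)

Definition bmat_hermitian (q : bmat) : Prop :=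
  forall k j, (k / 2 = j / 2)%nat -> q k j = Cconj (q j k).

Definition bmat_idempotent (q : bmat) : Prop :=
  forall k j, (k / 2 = j / 2)%nat -> bmat_mul q q k j = q k j.

Lemma block_op_selfadjoint q B :
  bmat_bounded q B -> bmat_hermitian q -> is_adjoint (block_op q) (block_op q).
Proof.
  intros HB Hh x y Hx Hy. rewrite !block_op_l2 by auto.
  pose proof (proj1 (block_apply_bound q B x HB Hx)) as Hqx.
  pose proof (proj1 (block_apply_bound q B y HB Hy)) as Hqy.
  destruct (ex_series_inner _ _ Hqx Hy) as [A1 A2].
  destruct (ex_series_inner _ _ Hx Hqy) as [B1 B2].
  assert (Key : forall n,
    Cplus (Cmult (block_apply q x (2 * n)%nat) (Cconj (y (2 * n)%nat)))
          (Cmult (block_apply q x (2 * n + 1)%nat) (Cconj (y (2 * n + 1)%nat))) =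
    Cplus (Cmult (x (2 * n)%nat) (Cconj (block_apply q y (2 * n)%nat)))
          (Cmult (x (2 * n + 1)%nat) (Cconj (block_apply q y (2 * n + 1)%nat)))).
  { intros n. unfold block_apply. rewrite !double_div2, !double_succ_div2.
    rewrite !Cplus_conj, !Cmult_conj.
    rewrite <- (Hh (2 * n)%nat (2 * n)%nat) by reflexivity.
    rewrite <- (Hh (2 * n)%nat (2 * n + 1)%nat) by (rewrite double_div2, double_succ_div2; auto).
    rewrite <- (Hh (2 * n + 1)%nat (2 * n)%nat) by (rewrite double_div2, double_succ_div2; auto).
    rewrite <- (Hh (2 * n + 1)%nat (2 * n + 1)%nat) by reflexivity.
    ring. }
  unfold inner. apply C_ext; cbn [fst snd].
  - rewrite (Series_pair_sums _ A1), (Series_pair_sums _ B1). apply Series_ext.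
    intros n. unfold pair_sums. specialize (Key n). apply (f_equal fst) in Key.
    simpl in Key |- *. lra.
  - rewrite (Series_pair_sums _ A2), (Series_pair_sums _ B2). apply Series_ext.
    intros n. unfold pair_sums. specialize (Key n). apply (f_equal snd) in Key.
    simpl in Key |- *. lra.
Qed.

Lemma block_op_projection q B : bmat_bounded q B -> bmat_hermitian q -> bmat_idempotent q ->
  is_projection (block_op q).
Proof.
  intros HB Hh Hi. split. apply (block_op_bounded q B HB). split.
  - rewrite (opcomp_block_op q q B HB). apply block_op_ext. auto.
  - apply (block_op_selfadjoint q B HB Hh).
Qed.

Definition eig_radius (a d b1 b2 : R) := sqrt (((a - d) / 2) ^ 2 + b1 ^ 2 + b2 ^ 2).
Definition eig_low a d b1 b2 := (a + d) / 2 - eig_radius a d b1 b2.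
Definition eig_gap a d b1 b2 := 2 * eig_radius a d b1 b2.

Lemma eig_radius_sq a d b1 b2 :
  eig_radius a d b1 b2 * eig_radius a d b1 b2 = ((a - d) / 2) ^ 2 + b1 ^ 2 + b2 ^ 2.
Proof.
  unfold eig_radius. apply sqrt_sqrt.
  pose proof (pow2_ge_0 ((a - d) / 2)). pose proof (pow2_ge_0 b1). pose proof (pow2_ge_0 b2). lra.
Qed.

Lemma eig_radius_nonneg a d b1 b2 : 0 <= eig_radius a d b1 b2.
Proof. apply sqrt_pos. Qed.

Lemma eig_radius_ge a d b1 b2 : Rabs ((a - d) / 2) <= eig_radius a d b1 b2 /\
  Rabs b1 <= eig_radius a d b1 b2 /\ Rabs b2 <= eig_radius a d b1 b2.
Proof.
  pose proof (eig_radius_sq a d b1 b2). pose proof (eig_radius_nonneg a d b1 b2).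
  set (r := eig_radius a d b1 b2) in *. set (p := (a - d) / 2) in *.
  pose proof (pow2_ge_0 p). pose proof (pow2_ge_0 b1). pose proof (pow2_ge_0 b2).
  repeat split; apply Rabs_le; split; nra.
Qed.

Lemma eig_radius_le a d b1 b2 : eig_radius a d b1 b2 <= Rabs ((a - d) / 2) + Rabs b1 + Rabs b2.
Proof.
  pose proof (eig_radius_sq a d b1 b2). pose proof (eig_radius_nonneg a d b1 b2).
  pose proof (Rabs_pos ((a - d) / 2)). pose proof (Rabs_pos b1). pose proof (Rabs_pos b2).
  set (r := eig_radius a d b1 b2) in *. set (p := (a - d) / 2) in *.
  assert (p ^ 2 = Rabs p * Rabs p) by (rewrite <- Rabs_mult; rewrite Rabs_pos_eq; nra).
  assert (b1 ^ 2 = Rabs b1 * Rabs b1) by (rewrite <- Rabs_mult; rewrite Rabs_pos_eq; nra).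
  assert (b2 ^ 2 = Rabs b2 * Rabs b2) by (rewrite <- Rabs_mult; rewrite Rabs_pos_eq; nra).
  apply Rsqr_incr_0_var; unfold Rsqr; nra.
Qed.

Section Hermitian2x2.
Variables a d b1 b2 : R.
Hypothesis Hg : 0 < eig_gap a d b1 b2.

(* The entries of [(H - eig_low) / eig_gap] for the Hermitian matrix [H] with
   diagonal [a], [d] and off-diagonal entries [b1 +- i b2]: the spectral
   projection onto its top eigenvalue [eig_low + eig_gap]. *)
Definition tproj00 : C := ((a - eig_low a d b1 b2) / eig_gap a d b1 b2, 0).
Definition tproj01 : C := (b1 / eig_gap a d b1 b2, b2 / eig_gap a d b1 b2).
Definition tproj10 : C := (b1 / eig_gap a d b1 b2, - b2 / eig_gap a d b1 b2).
Definition tproj11 : C := ((d - eig_low a d b1 b2) / eig_gap a d b1 b2, 0).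

Lemma tproj00_key :
  (a - eig_low a d b1 b2) ^ 2 + b1 ^ 2 + b2 ^ 2 = eig_gap a d b1 b2 * (a - eig_low a d b1 b2).
Proof. pose proof (eig_radius_sq a d b1 b2). unfold eig_low, eig_gap. nra. Qed.

Lemma tproj11_key :
  (d - eig_low a d b1 b2) ^ 2 + b1 ^ 2 + b2 ^ 2 = eig_gap a d b1 b2 * (d - eig_low a d b1 b2).
Proof. pose proof (eig_radius_sq a d b1 b2). unfold eig_low, eig_gap. nra. Qed.

Lemma tproj_trace : (a - eig_low a d b1 b2) + (d - eig_low a d b1 b2) = eig_gap a d b1 b2.
Proof. unfold eig_low, eig_gap. lra. Qed.

Ltac gsimpl := set (g := eig_gap a d b1 b2) in *; set (m := eig_low a d b1 b2) in *.

Lemma tproj_idem00 : Cplus (Cmult tproj00 tproj00) (Cmult tproj01 tproj10) = tproj00.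
Proof.
  pose proof tproj00_key. unfold tproj00, tproj01, tproj10. gsimpl. apply C_ext; simpl.
  - replace ((a - m) / g * ((a - m) / g) - 0 * 0 + (b1 / g * (b1 / g) - b2 / g * (- b2 / g)))
      with (((a - m) ^ 2 + b1 ^ 2 + b2 ^ 2) / (g * g)) by (field; lra).
    rewrite H. field. lra.
  - field. lra.
Qed.

Lemma tproj_idem11 : Cplus (Cmult tproj10 tproj01) (Cmult tproj11 tproj11) = tproj11.
Proof.
  pose proof tproj11_key. unfold tproj11, tproj01, tproj10. gsimpl. apply C_ext; simpl.
  - replace (b1 / g * (b1 / g) - - b2 / g * (b2 / g) + ((d - m) / g * ((d - m) / g) - 0 * 0))
      with (((d - m) ^ 2 + b1 ^ 2 + b2 ^ 2) / (g * g)) by (field; lra).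
    rewrite H. field. lra.
  - field. lra.
Qed.

Lemma tproj_idem01 : Cplus (Cmult tproj00 tproj01) (Cmult tproj01 tproj11) = tproj01.
Proof.
  pose proof tproj_trace. unfold tproj00, tproj11, tproj01. gsimpl. apply C_ext; simpl.
  - replace ((a - m) / g * (b1 / g) - 0 * (b2 / g) + (b1 / g * ((d - m) / g) - b2 / g * 0))
      with (b1 * ((a - m) + (d - m)) / (g * g)) by (field; lra). rewrite H. field. lra.
  - replace ((a - m) / g * (b2 / g) + 0 * (b1 / g) + (b1 / g * 0 + b2 / g * ((d - m) / g)))
      with (b2 * ((a - m) + (d - m)) / (g * g)) by (field; lra). rewrite H. field. lra.
Qed.

Lemma tproj_idem10 : Cplus (Cmult tproj10 tproj00) (Cmult tproj11 tproj10) = tproj10.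
Proof.
  pose proof tproj_trace. unfold tproj00, tproj11, tproj10. gsimpl. apply C_ext; simpl.
  - replace (b1 / g * ((a - m) / g) - - b2 / g * 0 + ((d - m) / g * (b1 / g) - 0 * (- b2 / g)))
      with (b1 * ((a - m) + (d - m)) / (g * g)) by (field; lra). rewrite H. field. lra.
  - replace (b1 / g * 0 + - b2 / g * ((a - m) / g) + ((d - m) / g * (- b2 / g) + 0 * (b1 / g)))
      with (- b2 * ((a - m) + (d - m)) / (g * g)) by (field; lra). rewrite H. field. lra.
Qed.

Lemma tproj_bounded :
  Cmod tproj00 <= 1 /\ Cmod tproj01 <= 1 /\ Cmod tproj10 <= 1 /\ Cmod tproj11 <= 1.
Proof.
  destruct (eig_radius_ge a d b1 b2) as (H1 & H2 & H3).
  unfold tproj00, tproj01, tproj10, tproj11, eig_low. unfold eig_gap in *.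
  set (r := eig_radius a d b1 b2) in *.
  assert (G : forall x, Rabs x <= 2 * r -> Rabs (x / (2 * r)) <= 1).
  { intros x Hx. unfold Rdiv. rewrite Rabs_mult, Rabs_inv, (Rabs_pos_eq (2 * r)) by lra.
    apply Rmult_le_reg_r with (2 * r). lra. rewrite Rmult_assoc, Rinv_l by lra. lra. }
  assert (G2 : forall x, Rabs x <= r -> Rabs (x / (2 * r)) <= 1 / 2).
  { intros x Hx. unfold Rdiv. rewrite Rabs_mult, Rabs_inv, (Rabs_pos_eq (2 * r)) by lra.
    apply Rmult_le_reg_r with (2 * r). lra. rewrite Rmult_assoc, Rinv_l by lra. lra. }
  assert (C1 : forall x, Rabs x <= 1 -> Cmod (x, 0) <= 1).
  { intros x Hx. change (Cmod (RtoC x) <= 1). rewrite Cmod_R. auto. }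
  assert (C2 : forall x y, Rabs x <= 1 / 2 -> Rabs y <= 1 / 2 -> Cmod (x, y) <= 1).
  { intros x y Hx Hy. eapply Rle_trans. apply Cmod_le_Rabs_re_im. simpl. lra. }
  repeat split.
  - apply C1, G. replace (a - ((a + d) / 2 - r)) with ((a - d) / 2 + r) by field.
    eapply Rle_trans. apply Rabs_triang. rewrite (Rabs_pos_eq r) by lra. lra.
  - apply C2; apply G2; auto.
  - apply C2; apply G2; auto. rewrite Rabs_Ropp. auto.
  - apply C1, G. replace (d - ((a + d) / 2 - r)) with (- ((a - d) / 2) + r) by field.
    eapply Rle_trans. apply Rabs_triang. rewrite (Rabs_pos_eq r) by lra. rewrite Rabs_Ropp. lra.
Qed.

End Hermitian2x2.

Definition bmat_id (k j : nat) : C := if (k =? j)%nat then RtoC 1 else RtoC 0.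

Lemma bmat_id_sym k j : bmat_id k j = bmat_id j k.
Proof. unfold bmat_id. rewrite Nat.eqb_sym. reflexivity. Qed.

Lemma bmat_id_conj k j : Cconj (bmat_id k j) = bmat_id k j.
Proof. unfold bmat_id. destruct (k =? j)%nat; apply Cconj_RtoC. Qed.

Definition blk_a (h : bmat) n := fst (h (2 * n)%nat (2 * n)%nat).
Definition blk_d (h : bmat) n := fst (h (2 * n + 1)%nat (2 * n + 1)%nat).
Definition blk_re (h : bmat) n := fst (h (2 * n)%nat (2 * n + 1)%nat).
Definition blk_im (h : bmat) n := snd (h (2 * n)%nat (2 * n + 1)%nat).
Definition block_low_eig h n := eig_low (blk_a h n) (blk_d h n) (blk_re h n) (blk_im h n).
Definition block_gap h n := eig_gap (blk_a h n) (blk_d h n) (blk_re h n) (blk_im h n).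

(* The blockwise spectral projection onto the top eigenvalue, kept only on the
   blocks whose eigenvalue gap is at least [dl]. *)
Definition top_proj (dl : R) (h : bmat) (k j : nat) : C :=
  if (k / 2 =? j / 2)%nat then
    (if Rle_dec dl (block_gap h (j / 2)%nat) then
       Cmult (Cplus (h k j) (Copp (Cmult (RtoC (block_low_eig h (j / 2)%nat)) (bmat_id k j))))
             (RtoC (/ block_gap h (j / 2)%nat))
     else RtoC 0)
  else RtoC 0.

Lemma hermitian_block_entries h n : bmat_hermitian h ->
  h (2 * n)%nat (2 * n)%nat = (blk_a h n, 0) /\
  h (2 * n + 1)%nat (2 * n + 1)%nat = (blk_d h n, 0) /\
  h (2 * n)%nat (2 * n + 1)%nat = (blk_re h n, blk_im h n) /\
  h (2 * n + 1)%nat (2 * n)%nat = (blk_re h n, - blk_im h n).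
Proof.
  intros Hh. unfold blk_a, blk_d, blk_re, blk_im.
  pose proof (Hh (2 * n)%nat (2 * n)%nat eq_refl) as H1.
  pose proof (Hh (2 * n + 1)%nat (2 * n + 1)%nat eq_refl) as H2.
  pose proof (Hh (2 * n + 1)%nat (2 * n)%nat
    ltac:(rewrite double_div2, double_succ_div2; reflexivity)) as H3.
  destruct (h (2 * n)%nat (2 * n)%nat) as [x1 y1].
  destruct (h (2 * n + 1)%nat (2 * n + 1)%nat) as [x2 y2].
  destruct (h (2 * n)%nat (2 * n + 1)%nat) as [x3 y3].
  destruct (h (2 * n + 1)%nat (2 * n)%nat) as [x4 y4].
  unfold Cconj in *; simpl in *. inversion H1. inversion H2. inversion H3.
  repeat split; f_equal; lra.
Qed.

Lemma top_proj_entries dl h n : bmat_hermitian h -> dl <= block_gap h n -> 0 < block_gap h n ->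
  let a := blk_a h n in let d := blk_d h n in let b1 := blk_re h n in let b2 := blk_im h n in
  top_proj dl h (2 * n)%nat (2 * n)%nat = tproj00 a d b1 b2 /\
  top_proj dl h (2 * n)%nat (2 * n + 1)%nat = tproj01 a d b1 b2 /\
  top_proj dl h (2 * n + 1)%nat (2 * n)%nat = tproj10 a d b1 b2 /\
  top_proj dl h (2 * n + 1)%nat (2 * n + 1)%nat = tproj11 a d b1 b2.
Proof.
  intros Hh Hd Hg. cbv zeta. destruct (hermitian_block_entries h n Hh) as (H1 & H2 & H3 & H4).
  unfold top_proj, bmat_id.
  rewrite !double_div2, !double_succ_div2, !Nat.eqb_refl, !double_succ_neq_double,
    !double_neq_double_succ.
  destruct (Rle_dec dl (block_gap h n)); [|lra].
  rewrite H1, H2, H3, H4. unfold tproj00, tproj01, tproj10, tproj11, block_gap, block_low_eig in *.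
  repeat split; apply C_ext; simpl; field; lra.
Qed.

Lemma top_proj_small_gap dl h n k j :
  block_gap h n < dl -> (j / 2)%nat = n -> top_proj dl h k j = RtoC 0.
Proof.
  intros H Hj. unfold top_proj. rewrite Hj. destruct (k / 2 =? n)%nat; auto.
  destruct (Rle_dec dl (block_gap h n)); auto. lra.
Qed.

Lemma top_proj_idempotent dl h : 0 < dl -> bmat_hermitian h -> bmat_idempotent (top_proj dl h).
Proof.
  intros Hdl Hh. unfold bmat_idempotent.
  apply same_block_ind; intros n; unfold bmat_mul; rewrite ?double_div2, ?double_succ_div2;
  (destruct (Rle_dec dl (block_gap h n)) as [Hle|Hlt];
   [ destruct (top_proj_entries dl h n Hh Hle ltac:(lra)) as (Q1 & Q2 & Q3 & Q4);
     rewrite ?Q1, ?Q2, ?Q3, ?Q4;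
     assert (Hg : 0 < eig_gap (blk_a h n) (blk_d h n) (blk_re h n) (blk_im h n))
       by (unfold block_gap in Hle; lra)
   | rewrite !(top_proj_small_gap dl h n) by (rewrite ?double_div2, ?double_succ_div2; auto; lra);
     apply C_ext; simpl; ring ]).
  - rewrite <- (tproj_idem00 _ _ _ _ Hg) at 3. ring.
  - rewrite <- (tproj_idem01 _ _ _ _ Hg) at 3. ring.
  - rewrite <- (tproj_idem10 _ _ _ _ Hg) at 3. ring.
  - rewrite <- (tproj_idem11 _ _ _ _ Hg) at 3. ring.
Qed.

Lemma top_proj_hermitian dl h : bmat_hermitian h -> bmat_hermitian (top_proj dl h).
Proof.
  intros Hh k j E. unfold top_proj. rewrite E, Nat.eqb_refl.
  destruct (Rle_dec dl (block_gap h (j / 2)%nat)); [|apply C_ext; simpl; ring].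
  rewrite Cmult_conj, Cplus_conj, Copp_conj, Cmult_conj, !Cconj_RtoC, bmat_id_conj, bmat_id_sym.
  rewrite <- (Hh k j E). reflexivity.
Qed.

Lemma top_proj_bounded dl h : 0 < dl -> bmat_hermitian h -> bmat_bounded (top_proj dl h) 1.
Proof.
  intros Hdl Hh k j. destruct (Nat.eqb_spec (k / 2) (j / 2)) as [E|E].
  - revert k j E. apply same_block_ind; intros n; rewrite ?double_div2, ?double_succ_div2;
    (destruct (Rle_dec dl (block_gap h n)) as [Hle|Hlt];
     [ destruct (top_proj_entries dl h n Hh Hle ltac:(lra)) as (Q1 & Q2 & Q3 & Q4);
       assert (Hg : 0 < eig_gap (blk_a h n) (blk_d h n) (blk_re h n) (blk_im h n))
         by (unfold block_gap in Hle; lra);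
       destruct (tproj_bounded _ _ _ _ Hg) as (F1 & F2 & F3 & F4)
     | rewrite (top_proj_small_gap dl h n) by (rewrite ?double_div2, ?double_succ_div2; auto; lra);
       rewrite Cmod_0; lra ]).
    + rewrite Q1; auto.
    + rewrite Q2; auto.
    + rewrite Q3; auto.
    + rewrite Q4; auto.
  - unfold top_proj. destruct (Nat.eqb_spec (k / 2) (j / 2)); try tauto. rewrite Cmod_0; lra.
Qed.

Lemma hermitian_spectral_decomp dl h k j : 0 < dl -> bmat_hermitian h -> (k / 2 = j / 2)%nat ->
  dl <= block_gap h (j / 2)%nat ->
  h k j = Cplus (Cmult (RtoC (block_low_eig h (j / 2)%nat)) (bmat_id k j))
                (Cmult (RtoC (block_gap h (j / 2)%nat)) (top_proj dl h k j)).
Proof.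
  intros Hdl Hh E Hle. unfold top_proj. rewrite E, Nat.eqb_refl.
  destruct (Rle_dec dl (block_gap h (j / 2)%nat)); [|lra].
  set (g := block_gap h (j / 2)%nat) in *.
  assert (Hg : RtoC g <> RtoC 0) by (intros H; apply RtoC_inj in H; lra).
  replace (RtoC (/ g)) with (Cinv (RtoC g)).
  - field. auto.
  - apply C_ext; simpl; field; lra.
Qed.

Lemma hermitian_shift_le_gap h k j : bmat_hermitian h -> (k / 2 = j / 2)%nat ->
  Cmod (Cplus (h k j) (Copp (Cmult (RtoC (block_low_eig h (j / 2)%nat)) (bmat_id k j))))
    <= block_gap h (j / 2)%nat.
Proof.
  intros Hh. revert k j. apply same_block_ind; intros n; rewrite ?double_div2, ?double_succ_div2;
  destruct (hermitian_block_entries h n Hh) as (H1 & H2 & H3 & H4); unfold bmat_id;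
  rewrite ?Nat.eqb_refl, ?double_succ_neq_double, ?double_neq_double_succ;
  unfold block_low_eig, block_gap, eig_low, eig_gap;
  destruct (eig_radius_ge (blk_a h n) (blk_d h n) (blk_re h n) (blk_im h n)) as (R1 & R2 & R3);
  pose proof (eig_radius_nonneg (blk_a h n) (blk_d h n) (blk_re h n) (blk_im h n));
  set (r := eig_radius (blk_a h n) (blk_d h n) (blk_re h n) (blk_im h n)) in *;
  set (a := blk_a h n) in *; set (d := blk_d h n) in *;
  set (b1 := blk_re h n) in *; set (b2 := blk_im h n) in *.
  - rewrite H1. replace (Cplus (a, 0) (Copp (Cmult (RtoC ((a + d) / 2 - r)) (RtoC 1))))
      with (RtoC ((a - d) / 2 + r)) by (apply C_ext; simpl; field).
    rewrite Cmod_R. eapply Rle_trans. apply Rabs_triang. rewrite (Rabs_pos_eq r); lra.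
  - rewrite H3. replace (Cplus (b1, b2) (Copp (Cmult (RtoC ((a + d) / 2 - r)) (RtoC 0))))
      with ((b1, b2) : C) by (apply C_ext; simpl; ring).
    eapply Rle_trans. apply Cmod_le_Rabs_re_im. simpl. lra.
  - rewrite H4. replace (Cplus (b1, - b2) (Copp (Cmult (RtoC ((a + d) / 2 - r)) (RtoC 0))))
      with ((b1, - b2) : C) by (apply C_ext; simpl; ring).
    eapply Rle_trans. apply Cmod_le_Rabs_re_im. simpl. rewrite Rabs_Ropp. lra.
  - rewrite H2. replace (Cplus (d, 0) (Copp (Cmult (RtoC ((a + d) / 2 - r)) (RtoC 1))))
      with (RtoC (- ((a - d) / 2) + r)) by (apply C_ext; simpl; field).
    rewrite Cmod_R. eapply Rle_trans. apply Rabs_triang. rewrite Rabs_Ropp, (Rabs_pos_eq r); lra.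
Qed.

Lemma coef_off_id alpha n : coef_eo bmat_id alpha n = RtoC 0 /\ coef_oe bmat_id alpha n = RtoC 0.
Proof.
  unfold coef_eo, coef_oe, block_form, bmat_id.
  rewrite !Nat.eqb_refl, !double_succ_neq_double, !double_neq_double_succ, RtoC_Ropp. split; ring.
Qed.

Lemma coef_off_top_proj dl h alpha n : 0 < dl ->
  Cmod (coef_eo (top_proj dl h) alpha n) <= Cmod (coef_eo h alpha n) / dl /\
  Cmod (coef_oe (top_proj dl h) alpha n) <= Cmod (coef_oe h alpha n) / dl.
Proof.
  intros Hdl.
  pose proof (Cmod_ge_0 (coef_eo h alpha n)). pose proof (Cmod_ge_0 (coef_oe h alpha n)).
  unfold coef_eo, coef_oe, block_form, top_proj.
  rewrite !double_div2, !double_succ_div2, !Nat.eqb_refl.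
  destruct (Rle_dec dl (block_gap h n)) as [Hle|Hlt].
  - unfold bmat_id. rewrite !Nat.eqb_refl, !double_succ_neq_double, !double_neq_double_succ.
    set (g := block_gap h n) in *.
    match goal with |- Cmod ?A <= _ /\ Cmod ?B <= _ =>
      replace A with (Cmult (coef_eo h alpha n) (RtoC (/ g)));
      [replace B with (Cmult (coef_oe h alpha n) (RtoC (/ g)))|] end.
    + rewrite !Cmod_mult, !Cmod_R, Rabs_pos_eq by (apply Rlt_le, Rinv_0_lt_compat; lra).
      split; (apply Rmult_le_compat_l; [apply Cmod_ge_0|]; apply Rinv_le_contravar; lra).
    + unfold coef_oe, block_form. rewrite RtoC_Ropp. ring.
    + unfold coef_eo, block_form. rewrite RtoC_Ropp. ring.
  - match goal with |- Cmod ?A <= _ /\ Cmod ?B <= _ =>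
      replace A with (RtoC 0) by ring; replace B with (RtoC 0) by ring end.
    rewrite Cmod_0. split; apply Rmult_le_pos; auto; apply Rlt_le, Rinv_0_lt_compat; lra.
Qed.

Lemma low_eig_gap_bound h BH n : bmat_bounded h BH ->
  Rabs (block_low_eig h n) <= 4 * BH /\ 0 <= block_gap h n <= 6 * BH.
Proof.
  intros HB. unfold block_low_eig, block_gap, eig_low, eig_gap, blk_a, blk_d, blk_re, blk_im.
  pose proof (Rle_trans _ _ _ (re_le_Cmod _) (HB (2 * n)%nat (2 * n)%nat)) as A1.
  pose proof (Rle_trans _ _ _ (re_le_Cmod _) (HB (2 * n + 1)%nat (2 * n + 1)%nat)) as A2.
  pose proof (Rle_trans _ _ _ (re_le_Cmod _) (HB (2 * n)%nat (2 * n + 1)%nat)) as A3.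
  pose proof (Rle_trans _ _ _ (im_le_Cmod _) (HB (2 * n)%nat (2 * n + 1)%nat)) as A4.
  unfold Re in *.
  set (a := fst (h (2 * n)%nat (2 * n)%nat)) in *.
  set (d := fst (h (2 * n + 1)%nat (2 * n + 1)%nat)) in *.
  set (b1 := fst (h (2 * n)%nat (2 * n + 1)%nat)) in *.
  set (b2 := snd (h (2 * n)%nat (2 * n + 1)%nat)) in *.
  pose proof (eig_radius_le a d b1 b2). pose proof (eig_radius_nonneg a d b1 b2).
  assert (Rabs ((a - d) / 2) <= BH).
  { unfold Rdiv. rewrite Rabs_mult, Rabs_inv, (Rabs_pos_eq 2) by lra.
    pose proof (Rabs_triang a (- d)). rewrite Rabs_Ropp in H1.
    apply Rmult_le_reg_r with 2. lra. rewrite Rmult_assoc, Rinv_l by lra. unfold Rminus. lra. }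
  assert (Rabs ((a + d) / 2) <= BH).
  { unfold Rdiv. rewrite Rabs_mult, Rabs_inv, (Rabs_pos_eq 2) by lra.
    pose proof (Rabs_triang a d).
    apply Rmult_le_reg_r with 2. lra. rewrite Rmult_assoc, Rinv_l by lra. lra. }
  split.
  - unfold Rminus. eapply Rle_trans. apply Rabs_triang.
    rewrite Rabs_Ropp, (Rabs_pos_eq (eig_radius a d b1 b2)) by auto. lra.
  - split; lra.
Qed.

(** * Staircase approximation of Hermitian block matrices *)

Definition restrict_blocks (a : R) (f : nat -> R) (q : bmat) (k j : nat) : C :=
  if Rle_dec a (f (j / 2)%nat) then q k j else RtoC 0.

Lemma restrict_blocks_bounded a f q B :
  0 <= B -> bmat_bounded q B -> bmat_bounded (restrict_blocks a f q) B.
Proof.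
  intros H0 H k j. unfold restrict_blocks.
  destruct (Rle_dec a (f (j / 2)%nat)); auto. rewrite Cmod_0; auto.
Qed.

Lemma restrict_blocks_hermitian a f q : bmat_hermitian q -> bmat_hermitian (restrict_blocks a f q).
Proof.
  intros H k j E. unfold restrict_blocks. rewrite E.
  destruct (Rle_dec a (f (j / 2)%nat)); auto. symmetry. apply Cconj_RtoC.
Qed.

Lemma restrict_blocks_idempotent a f q :
  bmat_idempotent q -> bmat_idempotent (restrict_blocks a f q).
Proof.
  intros H k j E. specialize (H k j E). unfold bmat_mul, restrict_blocks in *.
  rewrite double_div2, double_succ_div2. destruct (Rle_dec a (f (j / 2)%nat)); auto. ring.
Qed.

Lemma coef_off_restrict_blocks a f q alpha n :
  coef_eo (restrict_blocks a f q) alpha n =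
    (if Rle_dec a (f n) then coef_eo q alpha n else RtoC 0) /\
  coef_oe (restrict_blocks a f q) alpha n =
    (if Rle_dec a (f n) then coef_oe q alpha n else RtoC 0).
Proof.
  unfold coef_eo, coef_oe, block_form, restrict_blocks. rewrite !double_div2, !double_succ_div2.
  destruct (Rle_dec a (f n)); split; auto; ring.
Qed.

Lemma bmat_id_bounded : bmat_bounded bmat_id 1.
Proof. intros k j. unfold bmat_id. destruct (k =? j)%nat; rewrite ?Cmod_1, ?Cmod_0; lra. Qed.

Lemma bmat_id_hermitian : bmat_hermitian bmat_id.
Proof. intros k j _. rewrite bmat_id_sym, bmat_id_conj. reflexivity. Qed.

Lemma bmat_id_idempotent : bmat_idempotent bmat_id.
Proof.
  unfold bmat_idempotent. apply same_block_ind; intros n; unfold bmat_mul, bmat_id;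
  rewrite ?double_div2, ?double_succ_div2, ?Nat.eqb_refl, ?double_succ_neq_double,
    ?double_neq_double_succ; ring.
Qed.

Lemma bmat_zero_bounded : bmat_bounded (fun _ _ => RtoC 0) 1.
Proof. intros k j. rewrite Cmod_0. lra. Qed.

Lemma bmat_zero_hermitian : bmat_hermitian (fun _ _ => RtoC 0).
Proof. intros k j _. rewrite Cconj_RtoC. reflexivity. Qed.

Lemma bmat_zero_idempotent : bmat_idempotent (fun _ _ => RtoC 0).
Proof. intros k j _. unfold bmat_mul. ring. Qed.

Definition sym_mix (c s : C) (t : bmat) : bmat :=
  fun k j => Cmult c (Cplus (t k j) (Cmult s (Cconj (t j k)))).

Definition re_part : bmat -> bmat := sym_mix (RtoC (/ 2)) (RtoC 1).
Definition im_part : bmat -> bmat := sym_mix (0, - / 2) (RtoC (-1)).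

Lemma bmat_re_im_decomp t k j : t k j = Cplus (re_part t k j) (Cmult Ci (im_part t k j)).
Proof.
  unfold re_part, im_part, sym_mix. destruct (t k j) as [a b]. destruct (t j k) as [c d].
  apply C_ext; simpl; field.
Qed.

Lemma re_part_hermitian t : bmat_hermitian (re_part t).
Proof.
  intros k j _. unfold re_part, sym_mix. destruct (t k j) as [a b]. destruct (t j k) as [c d].
  apply C_ext; simpl; field.
Qed.

Lemma im_part_hermitian t : bmat_hermitian (im_part t).
Proof.
  intros k j _. unfold im_part, sym_mix. destruct (t k j) as [a b]. destruct (t j k) as [c d].
  apply C_ext; simpl; field.
Qed.

Lemma Cmod_mix_le (c s u v : C) eps :
  Cmod c <= / 2 -> Cmod s <= 1 -> Cmod u <= eps -> Cmod v <= eps ->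
  Cmod (Cmult c (Cplus u (Cmult s (Cconj v)))) <= eps.
Proof.
  intros Hc Hs Hu Hv. pose proof (Cmod_ge_0 s). pose proof (Cmod_ge_0 v).
  assert (Cmod s * Cmod v <= 1 * eps) by (apply Rmult_le_compat; auto).
  rewrite Cmod_mult. apply Rle_trans with (/ 2 * (2 * eps)); [|lra].
  apply Rmult_le_compat; try apply Cmod_ge_0; auto.
  eapply Rle_trans. apply Cmod_triangle. rewrite Cmod_mult, Cmod_conj. lra.
Qed.

Lemma sym_mix_bounded (c s : C) t B : Cmod c <= / 2 -> Cmod s <= 1 -> bmat_bounded t B ->
  bmat_bounded (sym_mix c s t) B.
Proof. intros Hc Hs HB k j. apply Cmod_mix_le; auto. Qed.

Lemma Cmod_half : Cmod (RtoC (/ 2)) <= / 2.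
Proof. rewrite Cmod_R, Rabs_pos_eq; lra. Qed.

Lemma Cmod_neg_half_i : Cmod (0, - / 2) <= / 2.
Proof.
  eapply Rle_trans. apply Cmod_le_Rabs_re_im. simpl. rewrite Rabs_R0, Rabs_Ropp, Rabs_pos_eq; lra.
Qed.

Lemma Cmod_m1 : Cmod (RtoC (-1)) <= 1.
Proof. rewrite Cmod_R, Rabs_m1. lra. Qed.

Lemma re_im_parts_bounded t B : bmat_bounded t B ->
  bmat_bounded (re_part t) B /\ bmat_bounded (im_part t) B.
Proof.
  intros HB. split; apply sym_mix_bounded; auto using Cmod_half, Cmod_neg_half_i, Cmod_m1.
  rewrite Cmod_1. lra.
Qed.

Lemma coef_off_sym_mix c s t alpha n :
  coef_eo (sym_mix c s t) alpha n =
    Cmult c (Cplus (coef_eo t alpha n) (Cmult s (Cconj (coef_oe t alpha n)))) /\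
  coef_oe (sym_mix c s t) alpha n =
    Cmult c (Cplus (coef_oe t alpha n) (Cmult s (Cconj (coef_eo t alpha n)))).
Proof.
  unfold sym_mix, coef_eo, coef_oe, block_form. rewrite !Cplus_conj, !Cmult_conj, !Cconj_RtoC.
  split; ring.
Qed.

Section AsympDiagonalBmat.
Variable XX : (nat -> Prop) -> Prop.
Variable alph : (nat -> Prop) -> R.

Definition bmat_asymp_diagonal (q : bmat) := forall X, XX X -> offdiag_vanishing X (alph X) q.

Lemma block_op_asymp_diagonal q B :
  bmat_bounded q B -> bmat_asymp_diagonal q -> asymp_diagonal XX alph (block_op q).
Proof.
  intros HB H. split. apply (block_op_A0 q B HB).
  intros X HX eps Heps. destruct (H X HX eps Heps) as [N HN]. exists N. intros n Hn HXn.
  unfold coef_eo, coef_oe. rewrite !block_form_block_op. apply HN; auto.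
Qed.

Lemma bmat_asymp_diagonal_restrict a f q :
  bmat_asymp_diagonal q -> bmat_asymp_diagonal (restrict_blocks a f q).
Proof.
  intros H X HX eps Heps. destruct (H X HX eps Heps) as [N HN]. exists N. intros n Hn HXn.
  destruct (coef_off_restrict_blocks a f q (alph X) n) as [E1 E2]. rewrite E1, E2.
  destruct (Rle_dec a (f n)). auto. rewrite Cmod_0. lra.
Qed.

Lemma bmat_asymp_diagonal_id : bmat_asymp_diagonal bmat_id.
Proof.
  intros X HX eps Heps. exists 0%nat. intros n _ _. destruct (coef_off_id (alph X) n) as [E1 E2].
  rewrite E1, E2, Cmod_0. lra.
Qed.

Lemma bmat_asymp_diagonal_zero : bmat_asymp_diagonal (fun _ _ => RtoC 0).
Proof.
  intros X HX eps Heps. exists 0%nat. intros n _ _. unfold coef_eo, coef_oe.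
  assert (E : forall u0 u1 v0 v1, block_form (fun _ _ => RtoC 0) n u0 u1 v0 v1 = RtoC 0)
    by (intros; unfold block_form; ring).
  rewrite !E, Cmod_0. split; lra.
Qed.

Lemma bmat_asymp_diagonal_top_proj dl h :
  0 < dl -> bmat_asymp_diagonal h -> bmat_asymp_diagonal (top_proj dl h).
Proof.
  intros Hdl H X HX eps Heps.
  destruct (H X HX (eps * dl) (Rmult_lt_0_compat _ _ Heps Hdl)) as [N HN].
  exists N. intros n Hn HXn.
  destruct (coef_off_top_proj dl h (alph X) n Hdl) as [E1 E2]. destruct (HN n Hn HXn) as [K1 K2].
  split; [eapply Rle_trans; [apply E1|] | eapply Rle_trans; [apply E2|]];
  apply Rmult_le_reg_r with dl; auto; unfold Rdiv; rewrite Rmult_assoc, Rinv_l by lra; lra.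
Qed.

Lemma bmat_asymp_diagonal_sym_mix c s t : Cmod c <= / 2 -> Cmod s <= 1 ->
  bmat_asymp_diagonal t -> bmat_asymp_diagonal (sym_mix c s t).
Proof.
  intros Hc Hs H X HX eps Heps. destruct (H X HX eps Heps) as [N HN]. exists N. intros n Hn HXn.
  destruct (coef_off_sym_mix c s t (alph X) n) as [E1 E2]. rewrite E1, E2.
  destruct (HN n Hn HXn) as [K1 K2]. split; apply Cmod_mix_le; auto.
Qed.

Lemma bmat_asymp_diagonal_re_im_parts t :
  bmat_asymp_diagonal t -> bmat_asymp_diagonal (re_part t) /\ bmat_asymp_diagonal (im_part t).
Proof.
  intros H.
  split; apply bmat_asymp_diagonal_sym_mix; auto using Cmod_half, Cmod_neg_half_i, Cmod_m1.
  rewrite Cmod_1. lra.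
Qed.

End AsympDiagonalBmat.

Definition zero_op : op := block_op (fun _ _ => RtoC 0).

Definition id_op : op := block_op bmat_id.

Definition layer_op (dl : R) (f : nat -> R) (q : bmat) (l : nat) : op :=
  block_op (restrict_blocks (INR l * dl) f q).

Fixpoint layer_sum (dl : R) (f : nat -> R) (q : bmat) (L : nat) : op :=
  match L with
  | O => zero_op
  | S L' => opadd (layer_sum dl f q L') (opscal (RtoC dl) (layer_op dl f q (S L')))
  end.

Fixpoint layer_count (dl : R) (L : nat) (x : R) : R :=
  match L with
  | O => 0
  | S L' => layer_count dl L' x + (if Rle_dec (INR (S L') * dl) x then 1 else 0)
  end.

Lemma entry_layer_sum dl f q L k j : (k / 2 = j / 2)%nat ->
  entry (layer_sum dl f q L) k j = Cmult (RtoC (dl * layer_count dl L (f (j / 2)%nat))) (q k j).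
Proof.
  intros E. induction L; cbn [layer_sum layer_count].
  - unfold zero_op. rewrite entry_block_op, (proj2 (Nat.eqb_eq _ _) E). apply C_ext; simpl; ring.
  - rewrite entry_opadd, entry_opscal, IHL. unfold layer_op.
    rewrite entry_block_op, (proj2 (Nat.eqb_eq _ _) E). unfold restrict_blocks.
    destruct (Rle_dec (INR (S L) * dl) (f (j / 2)%nat)); apply C_ext; simpl; ring.
Qed.

Lemma layer_count_spec dl : 0 < dl -> forall L x, 0 <= x ->
  layer_count dl L x <= INR L /\ (INR L * dl <= x -> layer_count dl L x = INR L) /\
  dl * layer_count dl L x <= x /\ (x < INR (S L) * dl -> x - dl * layer_count dl L x < dl) /\
  (x < dl -> layer_count dl L x = 0).
Proof.
  intros Hdl L x Hx. induction L as [|L IH]; cbn [layer_count].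
  - simpl INR. repeat split; intros; lra.
  - destruct IH as (I1 & I2 & I3 & I4 & I5). pose proof (pos_INR L).
    destruct (Rle_dec (INR (S L) * dl) x) as [Hle|Hlt]; rewrite !S_INR in *.
    + assert (Ec : layer_count dl L x = INR L) by (apply I2; nra).
      rewrite Ec. repeat split; intros; nra.
    + repeat split; intros; try lra.
Qed.

Lemma INR_unbounded x : exists L : nat, x < INR L.
Proof.
  assert (Hp : 0 < / (Rabs x + 1)) by (apply Rinv_0_lt_compat; pose proof (Rabs_pos x); lra).
  destruct (archimed_cor1 _ Hp) as [N [HN1 HN2]]. exists N.
  destruct (Rlt_or_le x (INR N)) as [H|H]; auto. exfalso.
  assert (HNp : 0 < INR N) by (apply lt_0_INR; lia).
  assert (INR N <= Rabs x + 1) by (pose proof (Rle_abs x); lra).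
  assert (/ (Rabs x + 1) <= / INR N) by (apply Rinv_le_contravar; auto). lra.
Qed.

(* Blockwise [h = block_low_eig * 1 + block_gap * top_proj]; each of the
   nonnegative reals [block_low_eig + 4 * BH] and [block_gap] is replaced by [dl]
   times the number of steps [l * dl], [1 <= l <= L], below it. *)
Definition staircase (dl : R) (h : bmat) (BH : R) (L : nat) : op :=
  opadd (opscal (RtoC (- (4 * BH))) id_op)
        (opadd (layer_sum dl (fun n => block_low_eig h n + 4 * BH) bmat_id L)
               (layer_sum dl (block_gap h) (top_proj dl h) L)).

Lemma entry_staircase dl h BH L k j : (k / 2 = j / 2)%nat ->
  entry (staircase dl h BH L) k j =
  Cplus (Cmult (RtoC (dl * layer_count dl L (block_low_eig h (j / 2)%nat + 4 * BH) - 4 * BH))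
               (bmat_id k j))
        (Cmult (RtoC (dl * layer_count dl L (block_gap h (j / 2)%nat))) (top_proj dl h k j)).
Proof.
  intros E. unfold staircase. rewrite !entry_opadd, entry_opscal, !entry_layer_sum by auto.
  unfold id_op. rewrite entry_block_op, (proj2 (Nat.eqb_eq _ _) E). apply C_ext; simpl; ring.
Qed.

Lemma Cmod_Rmult_le (r : R) (z : C) (A : R) :
  0 <= r -> r <= A -> Cmod z <= 1 -> Cmod (Cmult (RtoC r) z) <= A.
Proof.
  intros H0 H1 H2. rewrite Cmod_mult, Cmod_R, Rabs_pos_eq by auto. pose proof (Cmod_ge_0 z).
  apply Rle_trans with (r * 1). apply Rmult_le_compat_l; auto. lra.
Qed.

Lemma staircase_error dl h BH L k j : 0 < dl -> bmat_hermitian h -> bmat_bounded h BH ->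
  10 * BH < INR L * dl -> (k / 2 = j / 2)%nat ->
  Cmod (Cplus (h k j) (Cmult (RtoC (-1)) (entry (staircase dl h BH L) k j))) <= 2 * dl.
Proof.
  intros Hdl Hh HB HL E. rewrite entry_staircase by auto.
  set (n := (j / 2)%nat).
  destruct (low_eig_gap_bound h BH n HB) as [Hmu [Hg0 Hg1]]. apply Rabs_le_between in Hmu.
  pose proof (bmat_bounded_nonneg h BH HB) as HB0.
  set (x1 := block_low_eig h n + 4 * BH). assert (Hx1 : 0 <= x1) by (unfold x1; lra).
  destruct (layer_count_spec dl Hdl L x1 Hx1) as (_ & _ & A3 & A4 & _).
  specialize (A4 ltac:(rewrite S_INR; unfold x1; lra)). set (c1 := layer_count dl L x1) in *.
  destruct (layer_count_spec dl Hdl L (block_gap h n) Hg0) as (_ & _ & B3 & B4 & B5).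
  specialize (B4 ltac:(rewrite S_INR; lra)). set (c2 := layer_count dl L (block_gap h n)) in *.
  assert (Hid : Cmod (Cmult (RtoC (x1 - dl * c1)) (bmat_id k j)) <= dl)
    by (apply Cmod_Rmult_le; [lra | lra | apply bmat_id_bounded]).
  destruct (Rle_dec dl (block_gap h n)) as [Hle|Hlt].
  - rewrite (hermitian_spectral_decomp dl h k j Hdl Hh E Hle). fold n.
    assert (Cmod (Cmult (RtoC (block_gap h n - dl * c2)) (top_proj dl h k j)) <= dl)
      by (apply Cmod_Rmult_le; [lra | lra | apply top_proj_bounded; auto]).
    match goal with |- Cmod ?z <= _ => replace z with
      (Cplus (Cmult (RtoC (x1 - dl * c1)) (bmat_id k j))
             (Cmult (RtoC (block_gap h n - dl * c2)) (top_proj dl h k j)))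
      by (unfold x1; apply C_ext; simpl; ring) end.
    eapply Rle_trans. apply Cmod_triangle. lra.
  - assert (Hc2 : c2 = 0) by (apply B5; lra). rewrite Hc2.
    pose proof (hermitian_shift_le_gap h k j Hh E) as Hm. fold n in Hm.
    match goal with |- Cmod ?z <= _ => replace z with
      (Cplus (Cmult (RtoC (x1 - dl * c1)) (bmat_id k j))
             (Cplus (h k j) (Copp (Cmult (RtoC (block_low_eig h n)) (bmat_id k j)))))
      by (unfold x1; apply C_ext; simpl; ring) end.
    eapply Rle_trans. apply Cmod_triangle. lra.
Qed.

Definition re_im_staircase (dl : R) (t : bmat) (B : R) (L : nat) : op :=
  opadd (staircase dl (re_part t) B L) (opscal Ci (staircase dl (im_part t) B L)).

Lemma re_im_staircase_error dl t B L k j : 0 < dl -> bmat_bounded t B -> 10 * B < INR L * dl ->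
  (k / 2 = j / 2)%nat ->
  Cmod (Cplus (t k j) (Cmult (RtoC (-1)) (entry (re_im_staircase dl t B L) k j))) <= 4 * dl.
Proof.
  intros Hdl HB HL E. destruct (re_im_parts_bounded t B HB) as [Hb1 Hb2].
  unfold re_im_staircase. rewrite entry_opadd, entry_opscal, (bmat_re_im_decomp t k j).
  set (h1 := re_part t). set (h2 := im_part t).
  pose proof (staircase_error dl h1 B L k j Hdl (re_part_hermitian t) Hb1 HL E).
  pose proof (staircase_error dl h2 B L k j Hdl (im_part_hermitian t) Hb2 HL E).
  match goal with |- Cmod ?z <= _ => replace z with
    (Cplus (Cplus (h1 k j) (Cmult (RtoC (-1)) (entry (staircase dl h1 B L) k j)))
           (Cmult Ci (Cplus (h2 k j) (Cmult (RtoC (-1)) (entry (staircase dl h2 B L) k j)))))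
    by ring end.
  eapply Rle_trans. apply Cmod_triangle. rewrite Cmod_mult, Cmod_Ci. lra.
Qed.

Lemma A0_norm_diff_le T U c : A0 T -> A0 U -> 0 <= c ->
  (forall k j, (k / 2 = j / 2)%nat ->
     Cmod (Cplus (entry T k j) (Cmult (RtoC (-1)) (entry U k j))) <= c) ->
  forall x, l2 x -> norm2 (vadd (T x) (vscal (RtoC (-1)) (U x))) <= 2 * c * norm2 x.
Proof.
  intros HT HU Hc Hm x Hx.
  set (m := fun k j => Cplus (entry T k j) (Cmult (RtoC (-1)) (entry U k j))).
  assert (Ev : vadd (T x) (vscal (RtoC (-1)) (U x)) = block_apply m x).
  { apply vec_ext; intros j. unfold vadd, vscal.
    rewrite (A0_apply_block T HT x Hx j), (A0_apply_block U HU x Hx j).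
    unfold block_apply, m. ring. }
  rewrite Ev.
  destruct (norm2_pairwise_dominated x (block_apply m x) (2 * c ^ 2) Hx) as [_ Hn].
  - nra.
  - intros j. unfold block_apply, pair_sums. apply Cmod_lin2_sq; apply Hm.
    rewrite double_div2; reflexivity. rewrite double_succ_div2; reflexivity.
  - eapply Rle_trans. apply Hn. right. f_equal.
    replace (2 * (2 * c ^ 2)) with ((2 * c) ^ 2) by ring. apply sqrt_pow2. lra.
Qed.

(** * Generation by projections *)

Lemma cstar_subalg_iff (S1 S2 : opset) :
  (forall T, S1 T <-> S2 T) -> cstar_subalg S1 -> cstar_subalg S2.
Proof.
  intros E (H1 & H2 & H3 & H4 & H5 & H6).
  split; [|split; [|split; [|split; [|split]]]]; intros; rewrite <- ?E in *; eauto.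
  apply H6; auto. intros eps Heps. destruct (H0 eps Heps) as (U & HU & HTU).
  exists U. rewrite E. auto.
Qed.

Lemma cstar_subalg_inter (S1 S2 : opset) :
  cstar_subalg S1 -> cstar_subalg S2 -> cstar_subalg (fun T => S1 T /\ S2 T).
Proof.
  intros (A1 & A2 & A3 & A4 & A5 & A6) (B1 & B2 & B3 & B4 & B5 & B6).
  split; [|split; [|split; [|split; [|split]]]]; intros;
    repeat match goal with H : _ /\ _ |- _ => destruct H end; eauto.
  split.
  - apply A6; auto. intros eps Heps. destruct (H0 eps Heps) as (U & [HU _] & HTU). eauto.
  - apply B6; auto. intros eps Heps. destruct (H0 eps Heps) as (U & [_ HU] & HTU). eauto.
Qed.

(* Intersecting with [M] lets one assume that the C*-algebra [S] in the
   minimality argument lies inside [M]. *)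
Lemma generated_by_projections_intro (M : opset) : cstar_subalg M ->
  (forall S, cstar_subalg S -> (forall U, S U -> M U) ->
     (forall P, M P /\ is_projection P -> S P) -> forall T, M T -> S T) ->
  generated_by_projections M.
Proof.
  intros HM Hgen T. split.
  - intros HT S HS HG.
    apply (Hgen (fun U => S U /\ M U)); auto using cstar_subalg_inter.
    + intros U []; auto.
    + intros P HP. split; auto. apply HP.
  - intros HT. apply HT; auto. intros P []; auto.
Qed.

Section Generation.
Variable XX : (nat -> Prop) -> Prop.
Variable alph : (nat -> Prop) -> R.
Variable S : opset.
Hypothesis HS : cstar_subalg S.
Hypothesis HS_A0 : forall U, S U -> A0 U.
Hypothesis HS_proj : forall q, bmat_bounded q 1 -> bmat_hermitian q -> bmat_idempotent q ->
  bmat_asymp_diagonal XX alph q -> S (block_op q).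

Lemma layer_sum_in dl f q L : bmat_bounded q 1 -> bmat_hermitian q -> bmat_idempotent q ->
  bmat_asymp_diagonal XX alph q -> S (layer_sum dl f q L).
Proof.
  intros HB Hh Hi Ho. destruct HS as (_ & Hadd & Hscal & _). induction L; simpl.
  - apply HS_proj. apply bmat_zero_bounded. apply bmat_zero_hermitian. apply bmat_zero_idempotent.
    apply bmat_asymp_diagonal_zero.
  - apply Hadd; auto. apply Hscal. apply HS_proj.
    + apply restrict_blocks_bounded; auto; lra.
    + apply restrict_blocks_hermitian; auto.
    + apply restrict_blocks_idempotent; auto.
    + apply bmat_asymp_diagonal_restrict; auto.
Qed.

Lemma staircase_in dl h BH L : 0 < dl -> bmat_hermitian h -> bmat_asymp_diagonal XX alph h ->
  S (staircase dl h BH L).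
Proof.
  intros Hdl Hh Ho. destruct HS as (_ & Hadd & Hscal & _).
  assert (Hid : S id_op) by (apply HS_proj; auto using bmat_id_bounded, bmat_id_hermitian,
    bmat_id_idempotent, bmat_asymp_diagonal_id).
  apply Hadd. apply Hscal, Hid. apply Hadd.
  - apply layer_sum_in; auto using bmat_id_bounded, bmat_id_hermitian, bmat_id_idempotent,
      bmat_asymp_diagonal_id.
  - apply layer_sum_in; auto using top_proj_bounded, top_proj_hermitian, top_proj_idempotent,
      bmat_asymp_diagonal_top_proj.
Qed.

Lemma asymp_diagonal_in T : asymp_diagonal XX alph T -> S T.
Proof.
  intros [HA Ho]. destruct (A0_entry_bounded T HA) as [B HB].
  destruct HS as (_ & Hadd & Hscal & _ & _ & Hclosed). apply Hclosed. apply HA.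
  intros eps Heps. set (dl := eps / 8). assert (Hdl : 0 < dl) by (unfold dl; lra).
  destruct (INR_unbounded (10 * B / dl)) as [L HL].
  assert (HL' : 10 * B < INR L * dl).
  { apply Rmult_lt_compat_r with (r := dl) in HL; auto.
    unfold Rdiv in HL. rewrite Rmult_assoc, Rinv_l in HL by lra. lra. }
  set (U := re_im_staircase dl (entry T) B L).
  assert (HU : S U).
  { destruct (bmat_asymp_diagonal_re_im_parts XX alph (entry T) Ho) as [Ho1 Ho2].
    apply Hadd; [|apply Hscal]; apply staircase_in;
      auto using re_part_hermitian, im_part_hermitian. }
  exists U. split; auto. intros x Hx.
  replace eps with (2 * (4 * dl)) by (unfold dl; field).
  apply A0_norm_diff_le; auto. lra. intros k j E. apply re_im_staircase_error; auto.
Qed.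

End Generation.

Theorem lemma4p18 (XX : (nat -> Prop) -> Prop) (alph : (nat -> Prop) -> R) :
  wide XX -> coherent XX alph -> generated_by_projections (Mset XX alph).
Proof.
  intros _ [Hrange _].
  assert (Halpha : forall X, XX X -> alph X ^ 2 <= 1) by (intros X HX; destruct (Hrange X HX); nra).
  pose proof (fun T => Mset_iff_asymp_diagonal XX alph T Halpha) as HM.
  apply generated_by_projections_intro.
  - apply (cstar_subalg_iff (asymp_diagonal XX alph)).
    + intros T. symmetry. apply HM.
    + apply asymp_diagonal_cstar_subalg, Halpha.
  - intros S HS HSM HG T HT. apply (asymp_diagonal_in XX alph S HS).
    + intros U HU. apply HSM, HU.
    + intros q HB Hh Hi Ho. apply HG. split.
      * apply HM, (block_op_asymp_diagonal XX alph q 1 HB Ho).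
      * apply (block_op_projection q 1 HB Hh Hi).
    + apply HM, HT.
Qed.
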